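(* Let $\varepsilon\ge0$ and $\delta_0\in\mathbb R$ be such that \[ \inf_{[-\ell,\ell]}h_{\rm eq}-\varepsilon|\delta_0|>0\qquad\text{and}\qquad \varepsilon|\delta_0|<\tau_0(\varepsilon|\delta_0|)\,\frac{2r_0}{\ell}. \] Then there exists a unique global solution $\delta\in C^\infty(\mathbb R^+)$ of \[ \tau_0(\varepsilon\delta)^2\ddot\delta+\ell\dot\delta+\delta+\varepsilon\big(\tau_0(\varepsilon\delta)\tau_0'(\varepsilon\delta)+\gamma(\varepsilon\dot\delta)\big)\dot\delta^2=0 \] with initial condition $(\delta,\dot\delta)_{|t=0}=(\delta_0,0)$.
   Context: $\ell>0$, $\tau_{\rm buoy}>0$, $h_{\rm eq}$ a positive continuous even function on $[-\ell,\ell]$. For real $r$ with $h_{\rm eq}+r>0$, $\tau_0(r)=\big(\tau_{\rm buoy}^2+\frac1{2\ell}\int_{-\ell}^\ell\frac{x^2}{h_{\rm eq}(x)+r}dx\big)^{1/2}$ and $\tau_0'$ its derivative. $r_0=\frac4{27}$. For $r<r_0$, $\sigma_0(r)$ is the largest real root of $\sigma^3-\sigma^2+r=0$ (the real branch with $\sigma_0(0)=1$; the paper writes it by Cardano's formula $\sigma_0(r)=\frac13(1+C_-(r)+C_+(r))$, $C_\pm(r)=\frac32(-4r+2r_0\pm4\sqrt{r(r-r_0)})^{1/3}$). The function $\gamma$ is defined for $\ell y<2r_0$ by $y^2\gamma(y)=-(\sigma_0(\frac{\ell y}{2})-1)(3\sigma_0(\frac{\ell y}{2})-1)-\ell y$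 for $y\ne0$, and $\gamma(0)=\ell^2/4$; it is smooth. *)

From Stdlib Require Import Reals Lra.
From Coquelicot Require Import Coquelicot.
Open Scope R_scope.

Definition r0 : R := 4 / 27.

Definition tau0 (l tb : R) (h : R -> R) (r : R) : R :=
  sqrt (tb ^ 2 + / (2 * l) * RInt (fun x => x ^ 2 / (h x + r)) (- l) l).

Definition tau0' (l tb : R) (h : R -> R) (r : R) : R :=
  Derive (tau0 l tb h) r.

(* sigma_0(r) : largest real root of s^3 - s^2 + r = 0 (meaningful for r < r0) *)
Definition sigma0 (r : R) : R :=
  real (Lub_Rbar (fun s => s ^ 3 - s ^ 2 + r = 0)).

Definition gamma (l y : R) : R :=
  if Req_EM_T y 0 then l ^ 2 / 4
  else (- (sigma0 (l * y / 2) - 1) * (3 * sigma0 (l * y / 2) - 1) - l * y) / y ^ 2.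

Definition is_Rplus_deriv (f g : R -> R) : Prop :=
  (forall t, 0 < t -> is_derive f t (g t)) /\
  filterlim (fun t => (f t - f 0) / t) (at_right 0) (locally (g 0)).

Definition Cinf_Rplus (f : R -> R) : Prop :=
  exists d : nat -> R -> R,
    (forall t, 0 <= t -> d O t = f t) /\
    (forall n, is_Rplus_deriv (d n) (d (S n))).

(* delta is a global C^infinity solution on R^+ of
   tau0(eps d)^2 d'' + l d' + d + eps (tau0(eps d) tau0'(eps d) + gamma(eps d')) d'^2 = 0,
   (d, d')(0) = (d0, 0); the terms of the equation are required to be defined
   (h_eq + eps d > 0 on [-l,l], and l eps d' < 2 r0). *)
Definition is_global_solution (l tb : R) (h : R -> R) (eps d0 : R)
    (delta : R -> R) : Prop :=
  Cinf_Rplus delta /\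
  exists delta1 delta2 : R -> R,
    is_Rplus_deriv delta delta1 /\ is_Rplus_deriv delta1 delta2 /\
    delta 0 = d0 /\ delta1 0 = 0 /\
    forall t, 0 <= t ->
      (forall x, - l <= x <= l -> 0 < h x + eps * delta t) /\
      l * (eps * delta1 t) < 2 * r0 /\
      (tau0 l tb h (eps * delta t)) ^ 2 * delta2 t + l * delta1 t + delta t
      + eps * (tau0 l tb h (eps * delta t) * tau0' l tb h (eps * delta t)
               + gamma l (eps * delta1 t)) * (delta1 t) ^ 2 = 0.

(* Written as the first-order system [x' = v, v' = accel x v], the equation has smooth
   coefficients as long as [h_eq + eps x > 0] and [l eps v < 2 r0]: [tau0^2] is a parametric
   integral, and [gamma] is smooth because the branch [sigma0] of roots of the cubic has a
   nonvanishing derivative.  Since the friction [l v^2 + eps gamma(eps v) v^3] is nonnegative, the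
   energy [tau0(eps x)^2 v^2 / 2 + x^2 / 2] is nonincreasing; as [tau0^2] is decreasing, this gives
   [|x| <= |d0|] and [|v| <= |d0| / tau0(eps |d0|)], and the two hypotheses keep such [(x, v)]
   inside the region above.  Hence the Picard solution of the system truncated outside a slightly
   larger box never feels the truncation (continuous induction), two solutions coincide by
   Gronwall's argument, and every derivative of [x] is a finite sum of products [f(x) g(v)] of
   smooth functions. *)

From Stdlib Require Import Reals Lra Lia Psatz List Classical.
From Coquelicot Require Import Coquelicot.
Open Scope R_scope.

(** * Smooth functions on open sets *)

Fixpoint Ck (k : nat) (U : R -> Prop) (f : R -> R) : Prop :=
  match k with
  | O => forall x, U x -> continuous f x
  | S k => (forall x, U x -> ex_derive f x) /\ Ck k U (Derive f)
  end.

Definition smooth_on (U : R -> Prop) (f : R -> R) : Prop := forall k, Ck k U f.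

Lemma ex_derive_continuous_R (f : R -> R) x : ex_derive f x -> continuous f x.
Proof. apply (ex_derive_continuous (K := R_AbsRing) (V := R_NormedModule)). Qed.

Section SmoothCalculus.

Variable U : R -> Prop.
Hypothesis U_open : open U.

Lemma Ck_S k f : Ck (S k) U f -> Ck k U f.
Proof.
  revert f; induction k as [|k IH]; intros f [Hd HD].
  - intros x Ux. now apply ex_derive_continuous_R, Hd.
  - split; auto.
Qed.

Lemma Ck_ext k f g : (forall x, U x -> f x = g x) -> Ck k U f -> Ck k U g.
Proof.
  revert f g; induction k as [|k IH]; intros f g Hfg Hf.
  - intros x Ux. apply continuous_ext_loc with f; auto.
    apply (locally_open U); auto.
  - destruct Hf as [Hd HD]; split.
    + intros x Ux. destruct (Hd x Ux) as [df Hdf]. exists df.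
      apply is_derive_ext_loc with f; auto. apply (locally_open U); auto.
    + apply IH with (Derive f); auto.
      intros x Ux. apply Derive_ext_loc, (locally_open U); auto.
Qed.

Lemma Ck_const k c : Ck k U (fun _ => c).
Proof.
  revert c; induction k as [|k IH]; intros c.
  - intros x _. apply continuous_const.
  - split; [intros; apply ex_derive_const|].
    apply Ck_ext with (fun _ => 0); auto. intros; now rewrite Derive_const.
Qed.

Lemma Ck_id k : Ck k U (fun x => x).
Proof.
  destruct k as [|k].
  - intros x _. apply continuous_id.
  - split; [intros; apply ex_derive_id|].
    apply Ck_ext with (fun _ => 1); [intros; now rewrite Derive_id|apply Ck_const].
Qed.

Lemma Ck_plus k f g : Ck k U f -> Ck k U g -> Ck k U (fun x => f x + g x).
Proof.
  revert f g; induction k as [|k IH]; intros f g Hf Hg.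
  - intros x Ux. apply (continuous_plus f g); auto.
  - destruct Hf as [Fd FD], Hg as [Gd GD]; split.
    + intros x Ux. apply (ex_derive_plus f g); auto.
    + apply Ck_ext with (fun x => Derive f x + Derive g x); auto.
      intros x Ux. rewrite Derive_plus; auto.
Qed.

Lemma Ck_mult k f g : Ck k U f -> Ck k U g -> Ck k U (fun x => f x * g x).
Proof.
  revert f g; induction k as [|k IH]; intros f g Hf Hg.
  - intros x Ux. apply (continuous_mult f g); auto.
  - pose proof (Ck_S _ _ Hf) as Hf'. pose proof (Ck_S _ _ Hg) as Hg'.
    destruct Hf as [Fd FD], Hg as [Gd GD]; split.
    + intros x Ux. apply (ex_derive_mult f g); auto.
    + apply Ck_ext with (fun x => Derive f x * g x + f x * Derive g x); auto.
      * intros x Ux. rewrite Derive_mult; auto.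
      * apply Ck_plus; auto.
Qed.

Lemma Ck_inv k f : (forall x, U x -> f x <> 0) -> Ck k U f -> Ck k U (fun x => / f x).
Proof.
  intros Hnz; revert f Hnz; induction k as [|k IH]; intros f Hnz Hf.
  - intros x Ux. apply continuous_Rinv_comp; auto.
  - pose proof (Ck_S _ _ Hf) as Hf'. destruct Hf as [Fd FD]; split.
    + intros x Ux. apply ex_derive_inv; auto.
    + apply Ck_ext with (fun x => (-1 * Derive f x) * (/ f x * / f x)).
      * intros x Ux. rewrite Derive_inv; auto. field. auto.
      * apply Ck_mult; [apply Ck_mult; [apply Ck_const|auto]|apply Ck_mult; auto].
Qed.

Lemma smooth_const c : smooth_on U (fun _ => c).
Proof. intro k; apply Ck_const. Qed.

Lemma smooth_id : smooth_on U (fun x => x).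
Proof. intro k; apply Ck_id. Qed.

Lemma smooth_ext f g : (forall x, U x -> f x = g x) -> smooth_on U f -> smooth_on U g.
Proof. intros Hfg Hf k; apply Ck_ext with f; auto. Qed.

Lemma smooth_plus f g : smooth_on U f -> smooth_on U g -> smooth_on U (fun x => f x + g x).
Proof. intros Hf Hg k; apply Ck_plus; auto. Qed.

Lemma smooth_mult f g : smooth_on U f -> smooth_on U g -> smooth_on U (fun x => f x * g x).
Proof. intros Hf Hg k; apply Ck_mult; auto. Qed.

Lemma smooth_scal c f : smooth_on U f -> smooth_on U (fun x => c * f x).
Proof. intros; apply smooth_mult; auto using smooth_const. Qed.

Lemma smooth_opp f : smooth_on U f -> smooth_on U (fun x => - f x).
Proof.
  intros Hf. apply smooth_ext with (fun x => -1 * f x); [intros; ring|now apply smooth_scal].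
Qed.

Lemma smooth_inv f : (forall x, U x -> f x <> 0) -> smooth_on U f -> smooth_on U (fun x => / f x).
Proof. intros Hnz Hf k; apply Ck_inv; auto. Qed.

Lemma smooth_Derive f : smooth_on U f -> smooth_on U (Derive f).
Proof. intros Hf k. exact (proj2 (Hf (S k))). Qed.

Lemma smooth_is_derive f x : smooth_on U f -> U x -> is_derive f x (Derive f x).
Proof. intros Hf Ux. apply Derive_correct, (proj1 (Hf 1%nat)); auto. Qed.

Lemma smooth_continuous f x : smooth_on U f -> U x -> continuous f x.
Proof. intros Hf Ux. exact (Hf O x Ux). Qed.

Lemma Ck_comp k V a phi : (forall x, U x -> V (a x)) -> smooth_on V phi ->
  Ck k U a -> Ck k U (fun x => phi (a x)).
Proof.
  intros HUV; revert phi; induction k as [|k IH]; intros phi Hphi Ha.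
  - intros x Ux. apply (continuous_comp a phi); auto. apply (Hphi O); auto.
  - pose proof (Ck_S _ _ Ha) as Ha'. destruct Ha as [Ad AD].
    assert (Hd : forall x, U x ->
              is_derive (fun x => phi (a x)) x (Derive phi (a x) * Derive a x)).
    { intros x Ux.
      assert (Dphi : is_derive phi (a x) (Derive phi (a x)))
        by (apply Derive_correct, (proj1 (Hphi 1%nat)); auto).
      rewrite Rmult_comm.
      apply (is_derive_comp phi a x _ _ Dphi), Derive_correct; auto. }
    split.
    + intros x Ux. eexists. now apply Hd.
    + apply Ck_ext with (fun x => Derive phi (a x) * Derive a x).
      * intros x Ux. symmetry. now apply is_derive_unique, Hd.
      * apply Ck_mult; auto. apply IH; auto. intro j. exact (proj2 (Hphi (S j))).
Qed.

Lemma smooth_comp V a phi : (forall x, U x -> V (a x)) -> smooth_on V phi ->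
  smooth_on U a -> smooth_on U (fun x => phi (a x)).
Proof. intros HUV Hphi Ha k. apply Ck_comp with V; auto. Qed.

End SmoothCalculus.

Lemma open_continuous_lt (f : R -> R) c : (forall x, continuous f x) -> open (fun x => f x < c).
Proof. intros Hf. apply (open_comp f (fun z => z < c)); [intros; apply Hf|apply open_lt]. Qed.

Lemma open_continuous_gt (f : R -> R) c : (forall x, continuous f x) -> open (fun x => c < f x).
Proof. intros Hf. apply (open_comp f (fun z => c < z)); [intros; apply Hf|apply open_gt]. Qed.

(** * The root [sigma0] of the cubic and the coefficient [gamma] *)

Definition cubic (r s : R) : R := s ^ 3 - s ^ 2 + r.

Lemma cubic_increasing r s1 s2 : 2/3 <= s1 -> s1 < s2 -> cubic r s1 < cubic r s2.
Proof.
  intros H1 H2. unfold cubic.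
  set (a := s1 - 2/3). set (b := s2 - 2/3).
  replace s1 with (a + 2/3) by (unfold a; ring).
  replace s2 with (b + 2/3) by (unfold b; ring).
  assert (0 < (b - a) * (a + b + a * a + a * b + b * b)) by
    (apply Rmult_lt_0_compat; unfold a, b in *; nra).
  nra.
Qed.

Lemma cubic_root_exists r : r < r0 -> exists s, 2/3 < s /\ cubic r s = 0.
Proof.
  intros Hr. unfold r0 in Hr.
  assert (Hc : continuity (cubic r)).
  { intro x. unfold cubic. reg. }
  destruct (IVT (cubic r) (2/3) (2 + Rabs r) Hc) as [s [Hs Hs0]].
  - pose proof (Rabs_pos r); lra.
  - unfold cubic. lra.
  - unfold cubic. pose proof (Rle_abs (- r)) as Hr'. rewrite Rabs_Ropp in Hr'.
    pose proof (Rabs_pos r). nra.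
  - exists s. split; auto. destruct (Req_dec s (2/3)) as [->|]; [|lra].
    unfold cubic in Hs0. lra.
Qed.

Lemma cubic_root_unique r s1 s2 : 2/3 < s1 -> 2/3 < s2 ->
  cubic r s1 = 0 -> cubic r s2 = 0 -> s1 = s2.
Proof.
  intros H1 H2 E1 E2.
  destruct (Rtotal_order s1 s2) as [h|[h|h]]; auto.
  - pose proof (cubic_increasing r s1 s2). lra.
  - pose proof (cubic_increasing r s2 s1). lra.
Qed.

Lemma sigma0_spec r : r < r0 -> 2/3 < sigma0 r /\ cubic r (sigma0 r) = 0.
Proof.
  intros Hr. destruct (cubic_root_exists r Hr) as [s [Hs Hs0]].
  enough (Hl : Lub_Rbar (fun s => s ^ 3 - s ^ 2 + r = 0) = Finite s)
    by (unfold sigma0; rewrite Hl; auto).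
  apply is_lub_Rbar_unique. split.
  - intros x Hx. simpl. destruct (Rle_dec x (2/3)); [lra|].
    right. apply (cubic_root_unique r); auto. lra.
  - intros b Hb. now apply Hb.
Qed.

Lemma sigma0_0 : sigma0 0 = 1.
Proof.
  destruct (sigma0_spec 0) as [H1 H2]; [unfold r0; lra|].
  apply (cubic_root_unique 0); auto; [lra|unfold cubic; ring].
Qed.

(* [sigma0 r] is the root [s] of [s^2 (1 - s) = r], so [(s - 1) r = - s^2 (s - 1)^2]. *)
Lemma sigma0_sign r : r < r0 -> (sigma0 r - 1) * r <= 0.
Proof.
  intros Hr. destruct (sigma0_spec r Hr) as [_ H]. unfold cubic in H.
  replace ((sigma0 r - 1) * r) with (- (sigma0 r * (sigma0 r - 1)) ^ 2) by nra.
  pose proof (pow2_ge_0 (sigma0 r * (sigma0 r - 1))). lra.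
Qed.

Definition cubic_quot (a b : R) : R := a ^ 2 + a * b + b ^ 2 - a - b.

Lemma cubic_quot_lower a b : 2/3 < a -> 2/3 < b -> (a - 2/3) + (b - 2/3) <= cubic_quot a b.
Proof. intros Ha Hb. unfold cubic_quot. nra. Qed.

Lemma sigma0_diff r1 r : r1 < r0 -> r < r0 ->
  (sigma0 r1 - sigma0 r) * cubic_quot (sigma0 r1) (sigma0 r) = r - r1.
Proof.
  intros H1 H. destruct (sigma0_spec r1 H1) as [_ A], (sigma0_spec r H) as [_ B].
  unfold cubic, cubic_quot in *. nra.
Qed.

Lemma sigma0_lipschitz r1 r : r1 < r0 -> r < r0 ->
  Rabs (sigma0 r1 - sigma0 r) <= Rabs (r1 - r) / (sigma0 r - 2/3).
Proof.
  intros H1 H. pose proof (sigma0_diff r1 r H1 H) as D.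
  destruct (sigma0_spec r1 H1) as [S1 _], (sigma0_spec r H) as [S _].
  pose proof (cubic_quot_lower _ _ S1 S) as Q.
  apply Rle_div_r; [lra|].
  apply Rle_trans with (Rabs (sigma0 r1 - sigma0 r) * cubic_quot (sigma0 r1) (sigma0 r)).
  - apply Rmult_le_compat_l; [apply Rabs_pos|lra].
  - rewrite <- (Rabs_right (cubic_quot _ _)), <- Rabs_mult, D by lra.
    rewrite Rabs_minus_sym. lra.
Qed.

Lemma sigma0_continuous r : r < r0 -> continuous sigma0 r.
Proof.
  intros Hr. destruct (sigma0_spec r Hr) as [S _].
  apply filterlim_locally. intros eps.
  assert (Hd : 0 < Rmin (r0 - r) (eps * (sigma0 r - 2/3)))
    by (apply Rmin_pos; [lra|apply Rmult_lt_0_compat; [apply cond_pos|lra]]).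
  exists (mkposreal _ Hd). intros r1 Hr1.
  change (Rabs (r1 - r) < Rmin (r0 - r) (eps * (sigma0 r - 2/3))) in Hr1.
  pose proof (Rmin_l (r0 - r) (eps * (sigma0 r - 2/3))).
  pose proof (Rmin_r (r0 - r) (eps * (sigma0 r - 2/3))).
  change (Rabs (sigma0 r1 - sigma0 r) < eps).
  eapply Rle_lt_trans; [apply sigma0_lipschitz; auto; pose proof (Rle_abs (r1 - r)); lra|].
  apply Rlt_div_l; nra.
Qed.

Lemma sigma0_derive r : r < r0 -> is_derive sigma0 r (- / (sigma0 r * (3 * sigma0 r - 2))).
Proof.
  intros Hr. destruct (sigma0_spec r Hr) as [S _].
  set (g := fun r1 => - / cubic_quot (sigma0 r1) (sigma0 r)).
  assert (Hg : continuous g r).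
  { apply (continuous_comp sigma0 (fun s => - / cubic_quot s (sigma0 r))).
    - now apply sigma0_continuous.
    - pose proof (cubic_quot_lower _ _ S S). unfold cubic_quot in *.
      apply ex_derive_continuous_R. auto_derive. lra. }
  apply is_derive_Reals. intros eps Heps.
  destruct (proj1 (filterlim_locally g (g r)) Hg (mkposreal eps Heps)) as [d Hd].
  assert (Hd' : 0 < Rmin d (r0 - r)) by (apply Rmin_pos; [apply cond_pos|lra]).
  exists (mkposreal _ Hd'). intros h Hh0 Hh. simpl in Hh.
  pose proof (Rmin_l d (r0 - r)). pose proof (Rmin_r d (r0 - r)).
  assert (Hrh : r + h < r0) by (pose proof (Rle_abs h); lra).
  destruct (sigma0_spec (r + h) Hrh) as [Sh _].
  pose proof (cubic_quot_lower _ _ Sh S).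
  replace ((sigma0 (r + h) - sigma0 r) / h) with (g (r + h)).
  2:{ unfold g. pose proof (sigma0_diff (r + h) r Hrh Hr) as D.
       set (Q := cubic_quot _ _) in *.
       replace (sigma0 (r + h) - sigma0 r) with (- h / Q).
       - field. split; [lra|auto].
       - apply (Rmult_eq_reg_r Q); [|lra]. rewrite D. field. lra. }
  replace (- / (sigma0 r * (3 * sigma0 r - 2))) with (g r)
    by (unfold g, cubic_quot; do 2 f_equal; ring).
  apply Hd. change (Rabs (r + h - r) < d). replace (r + h - r) with h by ring. lra.
Qed.

Lemma sigma0_smooth : smooth_on (fun r => r < r0) sigma0.
Proof.
  assert (HO : open (fun r => r < r0)) by apply open_lt.
  intro k. induction k as [|k IH].
  - intros r Hr. apply ex_derive_continuous_R. eexists. now apply sigma0_derive.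
  - split; [intros r Hr; eexists; now apply sigma0_derive|].
    apply Ck_ext with (fun r => - / (sigma0 r * (3 * sigma0 r - 2))); auto.
    + intros r Hr. symmetry. now apply is_derive_unique, sigma0_derive.
    + apply (Ck_comp _ HO k (fun s => 2/3 < s) sigma0 (fun s => - / (s * (3 * s - 2)))); auto.
      * intros r Hr. now apply sigma0_spec.
      * assert (HO' : open (fun s => 2/3 < s)) by apply open_gt.
        apply smooth_opp, smooth_inv; auto; [intros; nra|].
        apply smooth_mult, smooth_plus, smooth_const; auto using smooth_id, smooth_scal.
Qed.

Definition gamma_num (l y : R) : R :=
  - (sigma0 (l * y / 2) - 1) * (3 * sigma0 (l * y / 2) - 1) - l * y.

(* [eps * gamma (eps v) * v^2], written without the removable singularity of [gamma] at 0. *)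
Definition gamma_term (l eps v : R) : R :=
  if Req_EM_T eps 0 then 0 else gamma_num l (eps * v) / eps.

Lemma gamma_term_eq l eps v : eps * gamma l (eps * v) * v ^ 2 = gamma_term l eps v.
Proof.
  unfold gamma_term, gamma. destruct (Req_EM_T eps 0) as [->|Heps]; [ring|].
  destruct (Req_EM_T (eps * v) 0) as [E|E].
  - assert (v = 0) as -> by (destruct (Rmult_integral _ _ E); tauto).
    unfold gamma_num. rewrite Rmult_0_r. replace (l * 0 / 2) with 0 by field.
    rewrite sigma0_0. field. auto.
  - unfold gamma_num. assert (v <> 0) by (intros ->; apply E; ring). field. auto.
Qed.

Lemma gamma_num_smooth l : smooth_on (fun y => l * y < 2 * r0) (gamma_num l).
Proof.
  assert (HO : open (fun y => l * y < 2 * r0))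
    by (apply open_continuous_lt; intros; apply ex_derive_continuous_R; auto_derive; auto).
  assert (Hs : smooth_on (fun y => l * y < 2 * r0) (fun y => sigma0 (l * y / 2))).
  { apply (smooth_comp _ HO (fun r => r < r0)); [intros; lra|apply sigma0_smooth|].
    apply smooth_ext with (fun y => (l / 2) * y); auto; [intros; field|].
    apply smooth_scal, smooth_id; auto. }
  unfold gamma_num. apply smooth_plus; auto.
  - apply smooth_mult; auto.
    + apply smooth_opp, smooth_plus, smooth_const; auto.
    + apply smooth_plus, smooth_const; auto. apply smooth_scal; auto.
  - apply smooth_opp, smooth_scal, smooth_id; auto.
Qed.

Lemma gamma_term_smooth l eps : smooth_on (fun v => l * (eps * v) < 2 * r0) (gamma_term l eps).
Proof.
  assert (HO : open (fun v => l * (eps * v) < 2 * r0))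
    by (apply open_continuous_lt; intros; apply ex_derive_continuous_R; auto_derive; auto).
  destruct (Req_EM_T eps 0) as [E|E].
  - apply smooth_ext with (fun _ => 0); auto using smooth_const.
    intros v _. unfold gamma_term. now destruct (Req_EM_T eps 0).
  - apply smooth_ext with (fun v => / eps * gamma_num l (eps * v)); auto.
    { intros v _. unfold gamma_term. destruct (Req_EM_T eps 0); [contradiction|field; auto]. }
    apply smooth_scal; auto.
    apply (smooth_comp _ HO (fun y => l * y < 2 * r0)); auto using gamma_num_smooth.
    apply smooth_scal, smooth_id; auto.
Qed.

(* The friction term [l v^2 + v * eps * gamma(eps v) * v^2] equals
   [-(sigma0 - 1) r (3 sigma0 - 1) * 2 / (l eps^2)] with [r = l eps v / 2]. *)
Lemma gamma_term_dissipative l eps v : 0 < l -> 0 <= eps -> l * (eps * v) < 2 * r0 ->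
  0 <= l * v ^ 2 + v * gamma_term l eps v.
Proof.
  intros Hl Heps Hv. unfold gamma_term. destruct (Req_EM_T eps 0) as [_|E0].
  - pose proof (pow2_ge_0 v). nra.
  - unfold gamma_num. set (r := l * (eps * v) / 2).
    assert (Hr : r < r0) by (unfold r; lra).
    pose proof (sigma0_sign r Hr). destruct (sigma0_spec r Hr) as [S _].
    replace (l * (eps * v) / 2) with r by reflexivity.
    replace (l * v ^ 2 + v * ((- (sigma0 r - 1) * (3 * sigma0 r - 1) - l * (eps * v)) / eps))
      with (- ((sigma0 r - 1) * r) * (3 * sigma0 r - 1) * (2 / (l * eps * eps)))
      by (unfold r; field; split; lra).
    assert (0 < 2 / (l * eps * eps)) by (apply Rdiv_lt_0_compat; [lra|];
      apply Rmult_lt_0_compat; [|lra]; apply Rmult_lt_0_compat; lra).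
    apply Rmult_le_pos; [apply Rmult_le_pos|]; lra.
Qed.

(** * The coefficient [tau0 ^ 2] *)

Definition clamp (a b x : R) : R := Rmax a (Rmin b x).

Lemma clamp_in a b x : a <= b -> a <= clamp a b x <= b.
Proof.
  intros. unfold clamp. split; [apply Rmax_l|].
  apply Rmax_lub; [auto|apply Rmin_l].
Qed.

Lemma clamp_id a b x : a <= x <= b -> clamp a b x = x.
Proof. intros. unfold clamp. rewrite Rmin_right, Rmax_right; lra. Qed.

Lemma clamp_lipschitz a b x y : Rabs (clamp a b x - clamp a b y) <= Rabs (x - y).
Proof.
  unfold clamp, Rmax, Rmin.
  repeat destruct Rle_dec; unfold Rabs; repeat destruct Rcase_abs; lra.
Qed.

Lemma clamp_continuous a b x : continuous (clamp a b) x.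
Proof.
  apply filterlim_locally. intros eps. exists eps. intros y Hy.
  exact (Rle_lt_trans _ _ _ (clamp_lipschitz a b y x) Hy).
Qed.

Lemma pow_continuous k x : continuous (fun y : R => y ^ k) x.
Proof. apply ex_derive_continuous_R. auto_derive. auto. Qed.

Section Tau0.

Variables (l tb : R) (h : R -> R) (m : R).
Hypothesis l_pos : 0 < l.
Hypothesis h_ge_m : forall x, - l <= x <= l -> m <= h x.
Hypothesis h_cont : forall x, - l <= x <= l ->
  filterlim h (within (fun y => - l <= y <= l) (locally x)) (locally (h x)).

(* [h] extended by constants outside [[-l, l]], so that the integrands below are
   continuous in both variables on the whole plane. *)
Definition h_ext (t : R) : R := h (clamp (- l) l t).

Lemma h_ext_eq t : - l <= t <= l -> h_ext t = h t.
Proof. intros. unfold h_ext. now rewrite clamp_id. Qed.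

Lemma h_ext_ge t : m <= h_ext t.
Proof. apply h_ge_m, clamp_in. lra. Qed.

Lemma h_ext_continuous t : continuous h_ext t.
Proof.
  apply (filterlim_comp _ _ _ (clamp (- l) l) h (locally t)
           (within (fun y => - l <= y <= l) (locally (clamp (- l) l t)))).
  - intros P HP. apply clamp_continuous in HP.
    unfold filtermap in *. eapply filter_imp; [|exact HP]. intros y Hy. apply Hy, clamp_in. lra.
  - apply h_cont, clamp_in. lra.
Qed.

Lemma h_attains_min : exists xm, - l <= xm <= l /\ forall x, - l <= x <= l -> h xm <= h x.
Proof.
  destruct (continuity_ab_min h_ext (- l) l) as [xm [Hmin Hxm]]; [lra| |].
  - intros c _. apply continuity_pt_filterlim, h_ext_continuous.
  - exists xm. split; auto. intros x Hx. specialize (Hmin x Hx). now rewrite !h_ext_eq in Hmin.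
Qed.

Definition moment_integrand (n : nat) (u t : R) : R := t ^ 2 * (/ (h_ext t + u)) ^ S n.

Definition moment (n : nat) (u : R) : R := RInt (moment_integrand n u) (- l) l.

Lemma moment_integrand_derive n u t : - m < u ->
  is_derive (fun z => moment_integrand n z t) u (- INR (S n) * moment_integrand (S n) u t).
Proof.
  intros Hu. pose proof (h_ext_ge t). unfold moment_integrand.
  set (a := h_ext t) in *.
  assert (D : is_derive (fun z => t ^ 2 * (/ (a + z)) ^ S n) u
                (t ^ 2 * (INR (S n) * (- 1 / (a + u) ^ 2) * (/ (a + u)) ^ n))).
  { apply is_derive_scal, (is_derive_pow (fun z => / (a + z))), is_derive_inv; [|lra].
    auto_derive; auto. }
  replace (- INR (S n) * (t ^ 2 * (/ (a + u)) ^ S (S n))) with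
    (t ^ 2 * (INR (S n) * (- 1 / (a + u) ^ 2) * (/ (a + u)) ^ n)); auto.
  simpl pow. field. lra.
Qed.

Lemma moment_integrand_continuous n u t : - m < u -> continuous (moment_integrand n u) t.
Proof.
  intros Hu. pose proof (h_ext_ge t). unfold moment_integrand.
  apply (continuous_mult (fun t => t ^ 2)); [apply pow_continuous|].
  apply (continuous_comp (fun t => / (h_ext t + u)) (fun y => y ^ S n)); [|apply pow_continuous].
  apply continuous_Rinv_comp; [|lra].
  apply (continuous_plus h_ext (fun _ => u)); [apply h_ext_continuous|apply continuous_const].
Qed.

Lemma moment_integrand_continuous_2d n u t : - m < u ->
  continuity_2d_pt (moment_integrand n) u t.
Proof.
  intros Hu. pose proof (h_ext_ge t). unfold moment_integrand.
  apply continuity_2d_pt_mult.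
  - apply (continuity_1d_2d_pt_comp (fun x => x ^ 2) (fun _ v => v)).
    + apply continuity_pt_filterlim, pow_continuous.
    + apply continuity_2d_pt_id2.
  - apply (continuity_1d_2d_pt_comp (fun x => x ^ S n) (fun u v => / (h_ext v + u))).
    + apply continuity_pt_filterlim, pow_continuous.
    + apply continuity_2d_pt_inv; [|lra].
      apply continuity_2d_pt_plus; [|apply continuity_2d_pt_id1].
      apply continuity_2d_pt_filterlim.
      apply (filterlim_comp _ _ _ snd h_ext (locally (u, t)) (locally t));
        [|apply h_ext_continuous].
      apply filterlim_locally. intros eps. exists eps. now intros z [_ Hz].
Qed.

Lemma ex_RInt_moment_integrand n u : - m < u -> ex_RInt (moment_integrand n u) (- l) l.
Proof.
  intros Hu. apply (ex_RInt_continuous (V := R_CompleteNormedModule)).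
  intros t _. now apply moment_integrand_continuous.
Qed.

Lemma moment_derive n u : - m < u -> is_derive (moment n) u (- INR (S n) * moment (S n) u).
Proof.
  intros Hu. unfold moment.
  assert (HO : open (fun x => - m < x)) by apply open_gt.
  replace (- INR (S n) * RInt (moment_integrand (S n) u) (- l) l)
    with (RInt (fun t => Derive (fun z => moment_integrand n z t) u) (- l) l).
  - apply (is_derive_RInt_param (moment_integrand n) (- l) l u).
    + apply (locally_open (fun x => - m < x)); auto. intros x Hx t _.
      eexists. now apply moment_integrand_derive.
    + intros t _.
      apply continuity_2d_pt_ext_loc with (fun u v => - INR (S n) * moment_integrand (S n) u v).
      * exists (mkposreal (u + m) ltac:(lra)). intros u' v' Hu' _. simpl in Hu'.
        symmetry. apply is_derive_unique, moment_integrand_derive.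
        apply Rabs_def2 in Hu'. lra.
      * apply continuity_2d_pt_mult; [apply continuity_2d_pt_const|].
        now apply moment_integrand_continuous_2d.
    + apply (locally_open (fun x => - m < x)); auto. intros x Hx.
      now apply ex_RInt_moment_integrand.
  - rewrite (RInt_ext _ (fun t => scal (- INR (S n)) (moment_integrand (S n) u t))).
    + rewrite (RInt_scal (V := R_CompleteNormedModule)); [reflexivity|].
      now apply ex_RInt_moment_integrand.
    + intros x _. now apply is_derive_unique, moment_integrand_derive.
Qed.

Lemma moment_nonneg n u : - m < u -> 0 <= moment n u.
Proof.
  intros Hu. unfold moment. apply RInt_ge_0; [lra|now apply ex_RInt_moment_integrand|].
  intros t _. pose proof (h_ext_ge t). unfold moment_integrand.
  apply Rmult_le_pos; [apply pow2_ge_0|]. apply pow_le. left. apply Rinv_0_lt_compat. lra.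
Qed.

Lemma moment_smooth n : smooth_on (fun u => - m < u) (moment n).
Proof.
  assert (HO : open (fun u => - m < u)) by apply open_gt.
  intro k. revert n. induction k as [|k IH]; intros n.
  - intros u Hu. apply ex_derive_continuous_R. eexists. now apply moment_derive.
  - split; [intros u Hu; eexists; now apply moment_derive|].
    apply Ck_ext with (fun u => - INR (S n) * moment (S n) u); auto.
    + intros u Hu. symmetry. now apply is_derive_unique, moment_derive.
    + apply Ck_mult; auto using Ck_const.
Qed.

Definition tau0sq (r : R) : R := tb ^ 2 + / (2 * l) * moment 0 r.

Lemma tau0sq_smooth : smooth_on (fun r => - m < r) tau0sq.
Proof.
  assert (HO : open (fun r => - m < r)) by apply open_gt.
  apply smooth_plus, smooth_scal, moment_smooth; auto using smooth_const.
Qed.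

Lemma tau0sq_derive r : - m < r -> is_derive tau0sq r (- / (2 * l) * moment 1 r).
Proof.
  intros Hr. unfold tau0sq.
  replace (- / (2 * l) * moment 1 r) with (0 + / (2 * l) * (- INR 1 * moment 1 r)) by (simpl; ring).
  apply (is_derive_plus (fun _ => tb ^ 2));
    [apply (is_derive_const (K := R_AbsRing) (V := R_NormedModule))|].
  now apply is_derive_scal, moment_derive.
Qed.

Hypothesis tb_pos : 0 < tb.

Lemma tau0sq_pos r : - m < r -> 0 < tau0sq r.
Proof.
  intros Hr. unfold tau0sq. pose proof (moment_nonneg 0 r Hr).
  assert (0 <= / (2 * l) * moment 0 r)
    by (apply Rmult_le_pos; [left; apply Rinv_0_lt_compat; lra|auto]).
  pose proof (pow_lt tb 2 tb_pos). lra.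
Qed.

Lemma tau0sq_antitone r1 r2 : - m < r1 -> r1 <= r2 -> tau0sq r2 <= tau0sq r1.
Proof.
  intros H1 H2.
  destruct (MVT_gen tau0sq r1 r2 (fun r => - / (2 * l) * moment 1 r)) as [c [Hc Hd]].
  - intros x Hx. apply tau0sq_derive. rewrite Rmin_left in Hx; lra.
  - intros x Hx. apply continuity_pt_filterlim, ex_derive_continuous_R.
    eexists. apply tau0sq_derive. rewrite Rmin_left in Hx; lra.
  - rewrite Rmin_left, Rmax_right in Hc by lra.
    pose proof (moment_nonneg 1 c ltac:(lra)).
    assert (0 <= / (2 * l) * moment 1 c * (r2 - r1))
      by (apply Rmult_le_pos; [apply Rmult_le_pos; [left; apply Rinv_0_lt_compat|]|]; lra).
    lra.
Qed.

Lemma tau0_eq r : - m < r -> tau0 l tb h r = sqrt (tau0sq r).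
Proof.
  intros Hr. unfold tau0, tau0sq, moment. do 3 f_equal.
  apply RInt_ext. intros x Hx. rewrite Rmin_left, Rmax_right in Hx by lra.
  unfold moment_integrand. rewrite h_ext_eq by lra. simpl. unfold Rdiv. ring.
Qed.

Lemma tau0_sqr r : - m < r -> tau0 l tb h r ^ 2 = tau0sq r.
Proof.
  intros Hr. rewrite tau0_eq by auto. pose proof (tau0sq_pos r Hr).
  simpl. rewrite Rmult_1_r. apply sqrt_sqrt. lra.
Qed.

Lemma tau0_mul_tau0' r : - m < r -> tau0 l tb h r * tau0' l tb h r = Derive tau0sq r / 2.
Proof.
  intros Hr. unfold tau0'. pose proof (tau0sq_pos r Hr) as Hp.
  assert (HO : open (fun x => - m < x)) by apply open_gt.
  rewrite (Derive_ext_loc _ (fun r => sqrt (tau0sq r))).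
  2:{ apply (locally_open (fun x => - m < x)); auto. intros; now apply tau0_eq. }
  rewrite (is_derive_unique _ _ (Derive tau0sq r / (2 * sqrt (tau0sq r)))).
  - rewrite tau0_eq by auto. pose proof (sqrt_lt_R0 _ Hp). field. lra.
  - apply is_derive_sqrt; auto. apply Derive_correct. eexists. now apply tau0sq_derive.
Qed.

End Tau0.

(** * Integral estimates and the Picard-Lindelof theorem *)

Lemma ex_RInt_cont (g : R -> R) a b : (forall x, continuous g x) -> ex_RInt g a b.
Proof. intros Hg. apply (ex_RInt_continuous (V := R_CompleteNormedModule)). auto. Qed.

Lemma RInt_swap_cont (g : R -> R) a b : (forall x, continuous g x) -> RInt g a b = - RInt g b a.
Proof.
  intros Hg. rewrite <- (opp_RInt_swap (V := R_CompleteNormedModule) g b a); [reflexivity|].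
  now apply ex_RInt_cont.
Qed.

Lemma RInt_minus_cont (g k : R -> R) a b : (forall x, continuous g x) -> (forall x, continuous k x) ->
  RInt g a b - RInt k a b = RInt (fun s => g s - k s) a b.
Proof.
  intros Hg Hk. rewrite (RInt_minus (V := R_CompleteNormedModule) g k); [reflexivity| |];
    now apply ex_RInt_cont.
Qed.

Lemma RInt_Chasles_cont (g : R -> R) a b c : (forall x, continuous g x) ->
  RInt g a c - RInt g a b = RInt g b c.
Proof.
  intros Hg. rewrite <- (RInt_Chasles (V := R_CompleteNormedModule) g a b c);
    [change (RInt g a b + RInt g b c - RInt g a b = RInt g b c); ring| |];
    now apply ex_RInt_cont.
Qed.

Lemma continuous_abs_comp (g : R -> R) x : continuous g x -> continuous (fun y => Rabs (g y)) x.
Proof.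
  intros Hg. apply (continuous_comp g Rabs); auto.
  apply continuity_pt_filterlim, Rcontinuity_abs.
Qed.

Lemma continuous_minus_fun (g k : R -> R) x : continuous g x -> continuous k x ->
  continuous (fun s => g s - k s) x.
Proof.
  intros Hg Hk. apply (continuous_plus g (fun s => - k s)); auto.
  apply (continuous_comp k Ropp); auto. apply continuity_pt_filterlim, continuity_pt_opp, continuity_pt_id.
Qed.

Lemma abs_RInt_le_abs (g k : R -> R) a b : (forall x, continuous g x) -> (forall x, continuous k x) ->
  (forall x, Rmin a b <= x <= Rmax a b -> Rabs (g x) <= k x) ->
  Rabs (RInt g a b) <= Rabs (RInt k a b).
Proof.
  intros Hg Hk.
  assert (Hab : forall a b, a <= b -> (forall x, a <= x <= b -> Rabs (g x) <= k x) ->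
            Rabs (RInt g a b) <= Rabs (RInt k a b)).
  { clear a b. intros a b Hab Hb.
    eapply Rle_trans; [apply abs_RInt_le; auto; now apply ex_RInt_cont|].
    eapply Rle_trans; [|apply Rle_abs].
    apply RInt_le; auto; [apply ex_RInt_cont; intros; now apply continuous_abs_comp|
                          now apply ex_RInt_cont|].
    intros x Hx. apply Hb. lra. }
  intros Hb. destruct (Rle_dec a b).
  - apply Hab; auto. intros x Hx. apply Hb. rewrite Rmin_left, Rmax_right; lra.
  - rewrite (RInt_swap_cont g), (RInt_swap_cont k), !Rabs_Ropp by auto.
    apply Hab; [lra|]. intros x Hx. apply Hb. rewrite Rmin_right, Rmax_left; lra.
Qed.

Lemma abs_RInt_le_const (g : R -> R) a b M : (forall x, continuous g x) ->
  (forall x, Rabs (g x) <= M) -> Rabs (RInt g a b) <= M * Rabs (b - a).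
Proof.
  intros Hg HM. assert (0 <= M) by (pose proof (HM 0); pose proof (Rabs_pos (g 0)); lra).
  eapply Rle_trans; [apply (abs_RInt_le_abs g (fun _ => M)); auto using continuous_const|].
  rewrite RInt_const. change (scal (b - a) M) with ((b - a) * M).
  rewrite Rabs_mult, (Rabs_right M); lra.
Qed.

Lemma exp_abs_continuous K x : continuous (fun s => exp (K * Rabs s)) x.
Proof. apply (continuous_comp (fun s => K * Rabs s) exp); apply continuity_pt_filterlim; reg. Qed.

Lemma RInt_exp_nonneg K t : 0 < K -> 0 <= t -> RInt (fun s => exp (K * s)) 0 t = (exp (K * t) - 1) / K.
Proof.
  intros HK Ht.
  rewrite (is_RInt_unique _ 0 t (minus (exp (K * t) / K) (exp (K * 0) / K))).
  - change (exp (K * t) / K - exp (K * 0) / K = (exp (K * t) - 1) / K).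
    rewrite Rmult_0_r, exp_0. field. lra.
  - apply (is_RInt_derive (V := R_CompleteNormedModule) (fun s => exp (K * s) / K)).
    + intros x _. auto_derive; auto. field. lra.
    + intros x _. apply (continuous_comp (fun s => K * s) exp); apply continuity_pt_filterlim; reg.
Qed.

(* The weight [exp (K |s|)] is even, so its integral over [0, t] is the odd function
   [sign t (exp (K |t|) - 1) / K]. *)
Lemma abs_RInt_exp_abs K t : 0 < K ->
  Rabs (RInt (fun s => exp (K * Rabs s)) 0 t) <= exp (K * Rabs t) / K.
Proof.
  intros HK.
  assert (Hpos : forall t, 0 <= t -> Rabs (RInt (fun s => exp (K * Rabs s)) 0 t) <= exp (K * Rabs t) / K).
  { clear t. intros t Ht.
    rewrite (RInt_ext _ (fun s => exp (K * s))).
    2:{ intros x Hx. rewrite Rmin_left, Rmax_right in Hx by lra. now rewrite Rabs_right by lra. }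
    rewrite RInt_exp_nonneg, (Rabs_right t) by lra.
    assert (1 <= exp (K * t)) by (pose proof (exp_ineq1_le (K * t)); nra).
    rewrite Rabs_right by (apply Rle_ge, Rdiv_le_0_compat; lra).
    unfold Rdiv. apply Rmult_le_compat_r; [left; apply Rinv_0_lt_compat|]; lra. }
  destruct (Rle_dec 0 t); auto.
  set (w := fun s => exp (K * Rabs s)).
  assert (Hw : forall a b, ex_RInt w a b) by (intros; apply ex_RInt_cont, exp_abs_continuous).
  assert (E : RInt w 0 (- t) = - RInt w 0 t).
  { pose proof (RInt_comp_lin (V := R_CompleteNormedModule) w (-1) 0 0 t (Hw _ _)) as C.
    replace (-1 * 0 + 0) with 0 in C by ring. replace (-1 * t + 0) with (- t) in C by ring.
    rewrite <- C, (RInt_ext _ (fun s => opp (w s))).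
    - now rewrite (RInt_opp (V := R_CompleteNormedModule)).
    - intros x _. unfold w. replace (-1 * x + 0) with (- x) by ring.
      rewrite Rabs_Ropp. change (-1 * exp (K * Rabs x) = - exp (K * Rabs x)). ring. }
  rewrite <- Rabs_Ropp, <- E, <- (Rabs_Ropp t). apply Hpos. lra.
Qed.

Lemma RInt_weighted_bound (g k : R -> R) c K t : 0 < K -> 0 <= c ->
  (forall x, continuous g x) -> (forall x, continuous k x) ->
  (forall s, Rabs (g s - k s) <= c * exp (K * Rabs s)) ->
  Rabs (RInt g 0 t - RInt k 0 t) <= c * exp (K * Rabs t) / K.
Proof.
  intros HK Hc Hg Hk Hb. rewrite RInt_minus_cont by auto.
  eapply Rle_trans.
  { apply (abs_RInt_le_abs _ (fun s => c * exp (K * Rabs s))); auto.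
    - intros; now apply continuous_minus_fun.
    - intros x. apply (continuous_mult (fun _ => c)); auto using continuous_const, exp_abs_continuous. }
  rewrite (RInt_scal (V := R_CompleteNormedModule) (fun s => exp (K * Rabs s)));
    [|apply ex_RInt_cont, exp_abs_continuous].
  change (Rabs (c * RInt (fun s => exp (K * Rabs s)) 0 t) <= c * exp (K * Rabs t) / K).
  rewrite Rabs_mult, Rabs_right by lra. unfold Rdiv. rewrite Rmult_assoc.
  apply Rmult_le_compat_l; auto. now apply abs_RInt_exp_abs.
Qed.

Lemma is_derive_RInt_0 (g : R -> R) c t : (forall x, continuous g x) ->
  is_derive (fun t => c + RInt g 0 t) t (g t).
Proof.
  intros Hg. replace (g t) with (0 + g t) by ring.
  apply (is_derive_plus (fun _ => c)); [apply (is_derive_const (K := R_AbsRing) (V := R_NormedModule))|].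
  apply (is_derive_RInt (V := R_CompleteNormedModule) g _ 0 t); auto.
  apply filter_forall. intros b. apply RInt_correct, ex_RInt_cont. auto.
Qed.

Lemma is_lim_seq_half_pow : is_lim_seq (fun n => (/ 2) ^ n) 0.
Proof. apply is_lim_seq_geom. rewrite Rabs_right; lra. Qed.

Lemma eq_of_geometric_bound a b c : (forall n, Rabs (a - b) <= c * (/ 2) ^ n) -> a = b.
Proof.
  intros Hab.
  assert (Hl : is_lim_seq (fun n => c * (/ 2) ^ n) 0).
  { replace (Finite 0) with (Rbar_mult c 0) by (simpl; f_equal; ring).
    apply (is_lim_seq_scal_l _ c 0), is_lim_seq_half_pow. }
  pose proof (is_lim_seq_le _ _ _ _ Hab (is_lim_seq_const (Rabs (a - b))) Hl) as Hle.
  simpl in Hle. pose proof (Rabs_pos (a - b)).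
  apply Rminus_diag_uniq, Rabs_eq_0. lra.
Qed.

Lemma geometric_cauchy (u : nat -> R) c :
  (forall n k, Rabs (u (n + k)%nat - u n) <= c * (/ 2) ^ n) ->
  exists l : R, is_lim_seq u l /\ forall n, Rabs (l - u n) <= c * (/ 2) ^ n.
Proof.
  intros Hu.
  assert (Hc : 0 <= c).
  { pose proof (Hu O O) as H0. simpl in H0. rewrite Rmult_1_r in H0.
    pose proof (Rabs_pos (u O - u O)). lra. }
  destruct (proj2 (ex_lim_seq_cauchy_corr u)) as [l Hl].
  - intros eps.
    assert (He : 0 < eps / (2 * c + 1)) by (apply Rdiv_lt_0_compat; [apply cond_pos|lra]).
    destruct (proj2 (is_lim_seq_spec _ _) is_lim_seq_half_pow (mkposreal _ He)) as [N HN].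
    exists N. intros n m Hn Hm.
    specialize (HN N (le_n _)). simpl in HN.
    rewrite Rminus_0_r, Rabs_right in HN by (apply Rle_ge, pow_le; lra).
    pose proof (Hu N (n - N)%nat) as An. pose proof (Hu N (m - N)%nat) as Am.
    replace (N + (n - N))%nat with n in An by lia. replace (N + (m - N))%nat with m in Am by lia.
    pose proof (Rabs_triang (u n - u N) (u N - u m)) as T.
    replace (u n - u N + (u N - u m)) with (u n - u m) in T by ring.
    rewrite (Rabs_minus_sym (u N)) in T.
    assert (Hc2 : 2 * c * (/ 2) ^ N <= 2 * c * (eps / (2 * c + 1))) by (apply Rmult_le_compat_l; lra).
    replace (2 * c * (eps / (2 * c + 1))) with (eps - eps / (2 * c + 1)) in Hc2 by (field; lra).
    lra.
  - exists l. split; auto. intros n.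
    apply (is_lim_seq_incr_n _ n) in Hl.
    assert (Hd : is_lim_seq (fun k => Rabs (u (k + n)%nat - u n)) (Rabs (l - u n))).
    { apply (is_lim_seq_abs _ (l - u n)), (is_lim_seq_minus _ _ l (u n)); auto using is_lim_seq_const.
      reflexivity. }
    assert (Hk : forall k, Rabs (u (k + n)%nat - u n) <= c * (/ 2) ^ n)
      by (intros k; rewrite Nat.add_comm; apply Hu).
    exact (is_lim_seq_le _ _ _ _ Hk Hd (is_lim_seq_const _)).
Qed.

Definition lipschitz (M : R) (p : R -> R) : Prop :=
  forall s t, Rabs (p s - p t) <= M * Rabs (s - t).

Definition lipschitz2 (L : R) (f : R -> R -> R) : Prop :=
  forall a b a' b', Rabs (f a b - f a' b') <= L * (Rabs (a - a') + Rabs (b - b')).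

Lemma lipschitz_continuous M p t : lipschitz M p -> continuous p t.
Proof.
  intros Hp. apply filterlim_locally. intros eps.
  assert (Hd : 0 < eps / (Rabs M + 1))
    by (apply Rdiv_lt_0_compat; [apply cond_pos|pose proof (Rabs_pos M); lra]).
  exists (mkposreal _ Hd). intros s Hs. change (Rabs (s - t) < eps / (Rabs M + 1)) in Hs.
  change (Rabs (p s - p t) < eps).
  pose proof (Hp s t). pose proof (Rle_abs M). pose proof (Rabs_pos M). pose proof (Rabs_pos (s - t)).
  apply Rlt_div_r in Hs; [|lra]. nra.
Qed.

Lemma lipschitz2_comp_continuous L f p q t : lipschitz2 L f ->
  continuous (p : R -> R) t -> continuous (q : R -> R) t -> continuous (fun s : R => f (p s) (q s)) t.
Proof.
  intros Hf Hp Hq. apply filterlim_locally. intros eps.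
  assert (He : 0 < eps / (2 * (Rabs L + 1)))
    by (apply Rdiv_lt_0_compat; [apply cond_pos|pose proof (Rabs_pos L); lra]).
  pose proof (proj1 (filterlim_locally p (p t)) Hp (mkposreal _ He)) as Bp.
  pose proof (proj1 (filterlim_locally q (q t)) Hq (mkposreal _ He)) as Bq.
  apply (filter_imp (fun s => ball (p t) (mkposreal _ He) (p s) /\ ball (q t) (mkposreal _ He) (q s)));
    [|now apply filter_and].
  intros s [Ds Dq]. change (Rabs (p s - p t) < eps / (2 * (Rabs L + 1))) in Ds.
  change (Rabs (q s - q t) < eps / (2 * (Rabs L + 1))) in Dq.
  change (Rabs (f (p s) (q s) - f (p t) (q t)) < eps).
  pose proof (Hf (p s) (q s) (p t) (q t)). pose proof (Rle_abs L). pose proof (Rabs_pos L).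
  pose proof (Rabs_pos (p s - p t)). pose proof (Rabs_pos (q s - q t)).
  assert (E : eps / (2 * (Rabs L + 1)) * (2 * (Rabs L + 1)) = eps) by (field; lra).
  nra.
Qed.

Lemma Rmax_lipschitz2 : lipschitz2 1 Rmax.
Proof.
  intros a b a' b'. unfold Rmax.
  repeat destruct Rle_dec; unfold Rabs; repeat destruct Rcase_abs; lra.
Qed.

Section Picard.

(* A planar system, with [z true] and [z false] the two components of a solution [z]. *)
Variables (f : bool -> R -> R -> R) (z0 : bool -> R) (L M : R).
Hypothesis L_pos : 0 < L.
Hypothesis f_lipschitz : forall i, lipschitz2 L (f i).
Hypothesis f_bounded : forall i a b, Rabs (f i a b) <= M.

Definition vector_field (z : bool -> R -> R) (i : bool) (s : R) : R := f i (z true s) (z false s).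

Fixpoint picard_iter (n : nat) : bool -> R -> R :=
  match n with
  | O => fun i _ => z0 i
  | S n => fun i t => z0 i + RInt (vector_field (picard_iter n) i) 0 t
  end.

Lemma M_nonneg : 0 <= M.
Proof. pose proof (f_bounded true 0 0). pose proof (Rabs_pos (f true 0 0)). lra. Qed.

Lemma vector_field_continuous z i t : (forall j, lipschitz M (z j)) -> continuous (vector_field z i) t.
Proof.
  intros Hz. apply (lipschitz2_comp_continuous L); [apply f_lipschitz|..];
    apply (lipschitz_continuous M), Hz.
Qed.

Lemma picard_iter_lipschitz n i : lipschitz M (picard_iter n i).
Proof.
  pose proof M_nonneg. revert i. induction n as [|n IH]; intros i s t; simpl.
  - rewrite Rminus_eq_0, Rabs_R0. pose proof (Rabs_pos (s - t)). nra.
  - rewrite Rminus_plus_l_l, RInt_Chasles_cont by (intros; now apply vector_field_continuous).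
    apply abs_RInt_le_const; [intros; now apply vector_field_continuous|]. intros; apply f_bounded.
Qed.

Lemma picard_iter_S n i t :
  picard_iter (S n) i t = z0 i + RInt (vector_field (picard_iter n) i) 0 t.
Proof. reflexivity. Qed.

Lemma vector_field_picard_iter_continuous n i t : continuous (vector_field (picard_iter n) i) t.
Proof. apply vector_field_continuous. intros; apply picard_iter_lipschitz. Qed.

Lemma vector_field_diff z w i s :
  Rabs (vector_field z i s - vector_field w i s)
  <= L * (Rabs (z true s - w true s) + Rabs (z false s - w false s)).
Proof. apply f_lipschitz. Qed.

(* With the weight [exp (4 L |t|)], each Picard step halves the distance between iterates. *)
Let K := 4 * L.
Let C := M / K.

Lemma C_nonneg : 0 <= C.
Proof. unfold C, K. apply Rdiv_le_0_compat; [apply M_nonneg|lra]. Qed.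

Lemma picard_iter_succ_diff n i t :
  Rabs (picard_iter (S n) i t - picard_iter n i t) <= C * (/ 2) ^ n * exp (K * Rabs t).
Proof.
  pose proof C_nonneg. revert i t. induction n as [|n IH]; intros i t.
  - rewrite picard_iter_S. simpl picard_iter at 2.
    rewrite Rplus_minus_l.
    eapply Rle_trans.
    { apply abs_RInt_le_const; [apply vector_field_picard_iter_continuous|intros; apply f_bounded]. }
    rewrite Rminus_0_r. pose proof (exp_ineq1_le (K * Rabs t)). pose proof (Rabs_pos t).
    replace M with (C * K) by (unfold C, K; field; lra).
    simpl. unfold K in *. nra.
  - rewrite (picard_iter_S (S n)), (picard_iter_S n).
    rewrite Rminus_plus_l_l.
    eapply Rle_trans.
    { apply (RInt_weighted_bound _ _ (L * (2 * C * (/ 2) ^ n)) K);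
        auto using vector_field_picard_iter_continuous.
      - unfold K; lra.
      - apply Rmult_le_pos; [lra|]. pose proof (pow_le (/ 2) n ltac:(lra)). nra.
      - intros s. eapply Rle_trans; [apply vector_field_diff|].
        pose proof (IH true s). pose proof (IH false s).
        replace (L * (2 * C * (/ 2) ^ n) * exp (K * Rabs s))
          with (L * (C * (/ 2) ^ n * exp (K * Rabs s) + C * (/ 2) ^ n * exp (K * Rabs s))) by ring.
        apply Rmult_le_compat_l; lra. }
    right. simpl. unfold K. field. lra.
Qed.

Lemma picard_iter_cauchy n k i t :
  Rabs (picard_iter (n + k) i t - picard_iter n i t) <= 2 * C * exp (K * Rabs t) * (/ 2) ^ n.
Proof.
  pose proof (exp_pos (K * Rabs t)). pose proof C_nonneg.
  enough (Hk : Rabs (picard_iter (n + k) i t - picard_iter n i t)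
               <= 2 * C * exp (K * Rabs t) * ((/ 2) ^ n - (/ 2) ^ (n + k))).
  { eapply Rle_trans; [exact Hk|]. apply Rmult_le_compat_l; [nra|].
    pose proof (pow_le (/ 2) (n + k) ltac:(lra)). lra. }
  induction k as [|k IH].
  - rewrite Nat.add_0_r, !Rminus_eq_0, Rabs_R0. lra.
  - rewrite Nat.add_succ_r.
    pose proof (picard_iter_succ_diff (n + k) i t).
    pose proof (Rabs_triang (picard_iter (S (n + k)) i t - picard_iter (n + k) i t)
                            (picard_iter (n + k) i t - picard_iter n i t)) as T.
    replace (picard_iter (S (n + k)) i t - picard_iter (n + k) i t
             + (picard_iter (n + k) i t - picard_iter n i t))
      with (picard_iter (S (n + k)) i t - picard_iter n i t) in T by ring.
    replace (2 * C * exp (K * Rabs t) * ((/ 2) ^ n - (/ 2) ^ S (n + k)))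
      with (C * (/ 2) ^ (n + k) * exp (K * Rabs t)
            + 2 * C * exp (K * Rabs t) * ((/ 2) ^ n - (/ 2) ^ (n + k))) by (simpl; field).
    lra.
Qed.

Definition picard_limit (i : bool) (t : R) : R := real (Lim_seq (fun n => picard_iter n i t)).

Lemma picard_limit_spec i t :
  is_lim_seq (fun n => picard_iter n i t) (picard_limit i t) /\
  forall n, Rabs (picard_limit i t - picard_iter n i t) <= 2 * C * exp (K * Rabs t) * (/ 2) ^ n.
Proof.
  destruct (geometric_cauchy _ _ (fun n k => picard_iter_cauchy n k i t)) as [z [Hz Hb]].
  unfold picard_limit. rewrite (is_lim_seq_unique _ _ Hz). split; [exact Hz|exact Hb].
Qed.

Lemma picard_limit_lipschitz i : lipschitz M (picard_limit i).
Proof.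
  intros s t.
  assert (Hd : is_lim_seq (fun n => Rabs (picard_iter n i s - picard_iter n i t))
                 (Rabs (picard_limit i s - picard_limit i t))).
  { apply (is_lim_seq_abs _ (picard_limit i s - picard_limit i t)).
    apply (is_lim_seq_minus _ _ (picard_limit i s) (picard_limit i t));
      [apply picard_limit_spec|apply picard_limit_spec|reflexivity]. }
  exact (is_lim_seq_le _ _ _ _ (fun n => picard_iter_lipschitz n i s t) Hd (is_lim_seq_const _)).
Qed.

Lemma picard_limit_integral i t :
  picard_limit i t = z0 i + RInt (vector_field picard_limit i) 0 t.
Proof.
  pose proof C_nonneg. pose proof (exp_pos (K * Rabs t)).
  apply (eq_of_geometric_bound _ _ (2 * C * exp (K * Rabs t))). intros n.
  assert (Hz : Rabs (picard_limit i t - (z0 i + RInt (vector_field (picard_iter n) i) 0 t))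
               <= C * exp (K * Rabs t) * (/ 2) ^ n).
  { rewrite <- picard_iter_S. eapply Rle_trans; [apply picard_limit_spec|]. right. simpl. field. }
  assert (HI : Rabs (RInt (vector_field (picard_iter n) i) 0 t - RInt (vector_field picard_limit i) 0 t)
               <= C * exp (K * Rabs t) * (/ 2) ^ n).
  { eapply Rle_trans.
    { apply (RInt_weighted_bound _ _ (L * (4 * C * (/ 2) ^ n)) K).
      - unfold K; lra.
      - apply Rmult_le_pos; [lra|]. pose proof (pow_le (/ 2) n ltac:(lra)). nra.
      - apply vector_field_picard_iter_continuous.
      - intros; apply vector_field_continuous, picard_limit_lipschitz.
      - intros s. eapply Rle_trans; [apply vector_field_diff|].
        pose proof (proj2 (picard_limit_spec true s) n). pose proof (proj2 (picard_limit_spec false s) n).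
        rewrite (Rabs_minus_sym (picard_iter n true s)), (Rabs_minus_sym (picard_iter n false s)).
        replace (L * (4 * C * (/ 2) ^ n) * exp (K * Rabs s))
          with (L * (2 * C * exp (K * Rabs s) * (/ 2) ^ n + 2 * C * exp (K * Rabs s) * (/ 2) ^ n))
          by ring.
        apply Rmult_le_compat_l; lra. }
    right. unfold K. field. lra. }
  set (In := RInt (vector_field (picard_iter n) i) 0 t) in *.
  set (I := RInt (vector_field picard_limit i) 0 t) in *.
  pose proof (Rabs_triang (picard_limit i t - (z0 i + In)) (In - I)) as T.
  replace (picard_limit i t - (z0 i + In) + (In - I)) with (picard_limit i t - (z0 i + I)) in T by ring.
  lra.
Qed.

Theorem picard_lindelof : exists z : bool -> R -> R,
  (forall i, z i 0 = z0 i) /\ forall i t, is_derive (z i) t (f i (z true t) (z false t)).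
Proof.
  exists picard_limit. split.
  - intros i. rewrite picard_limit_integral, RInt_point. apply Rplus_0_r.
  - intros i t.
    apply (is_derive_ext (fun t => z0 i + RInt (vector_field picard_limit i) 0 t)).
    + intros s. symmetry. apply picard_limit_integral.
    + apply (is_derive_RInt_0 (vector_field picard_limit i)).
      intros; apply vector_field_continuous, picard_limit_lipschitz.
Qed.

End Picard.


(** * One-sided continuity at [0] and continuous induction *)

Definition right_continuous0 (f : R -> R) : Prop := filterlim f (at_right 0) (locally (f 0)).

Lemma right_continuous0_ext f g : (forall t, f t = g t) -> right_continuous0 f -> right_continuous0 g.
Proof. intros E H. unfold right_continuous0 in *. rewrite <- E. now apply filterlim_ext with f. Qed.

Lemma right_continuous0_const c : right_continuous0 (fun _ => c).
Proof. apply filterlim_const. Qed.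

Lemma right_continuous0_plus f g :
  right_continuous0 f -> right_continuous0 g -> right_continuous0 (fun t => f t + g t).
Proof.
  intros Hf Hg. apply (filterlim_comp_2 f g Rplus Hf Hg).
  apply (filterlim_plus (K := R_AbsRing) (V := R_NormedModule)).
Qed.

Lemma right_continuous0_mult f g :
  right_continuous0 f -> right_continuous0 g -> right_continuous0 (fun t => f t * g t).
Proof.
  intros Hf Hg. apply (filterlim_comp_2 f g Rmult Hf Hg), (filterlim_mult (K := R_AbsRing)).
Qed.

Lemma right_continuous0_minus f g :
  right_continuous0 f -> right_continuous0 g -> right_continuous0 (fun t => f t - g t).
Proof.
  intros Hf Hg. apply (right_continuous0_ext (fun t => f t + (-1) * g t)); [intros; ring|].
  apply right_continuous0_plus, right_continuous0_mult; auto using right_continuous0_const.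
Qed.

Lemma right_continuous0_comp f g :
  right_continuous0 f -> continuous g (f 0) -> right_continuous0 (fun t => g (f t)).
Proof. intros Hf Hg. exact (filterlim_comp _ _ _ f g _ _ _ Hf Hg). Qed.

Lemma right_continuous0_of_continuous f : continuous f 0 -> right_continuous0 f.
Proof.
  intros H P HP. destruct (H P HP) as [d Hd]. exists d. intros y Hy _. now apply Hd.
Qed.

Lemma right_continuous0_of_quotient (f : R -> R) (l : R) :
  filterlim (fun t => (f t - f 0) / t) (at_right 0) (locally l) -> right_continuous0 f.
Proof.
  intros H. apply filterlim_locally. intros eps.
  destruct (proj1 (filterlim_locally _ l) H (mkposreal 1 Rlt_0_1)) as [d Hd].
  assert (Hd' : 0 < Rmin d (eps / (Rabs l + 1)))
    by (apply Rmin_pos; [apply cond_pos|apply Rdiv_lt_0_compat];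
        [apply cond_pos|pose proof (Rabs_pos l); lra]).
  exists (mkposreal _ Hd'). intros t Ht Htp. change (Rabs (t - 0) < Rmin d (eps / (Rabs l + 1))) in Ht.
  rewrite Rminus_0_r, Rabs_right in Ht by lra.
  pose proof (Rmin_l d (eps / (Rabs l + 1))) as Hmin1.
  pose proof (Rmin_r d (eps / (Rabs l + 1))) as Hmin2.
  assert (Hq : Rabs ((f t - f 0) / t - l) < 1).
  { apply (Hd t); auto. change (Rabs (t - 0) < d). rewrite Rminus_0_r, Rabs_right; lra. }
  change (Rabs (f t - f 0) < eps).
  replace (f t - f 0) with (t * ((f t - f 0) / t)) by (field; lra).
  rewrite Rabs_mult, (Rabs_right t) by lra.
  pose proof (Rabs_triang_inv ((f t - f 0) / t) l). pose proof (Rabs_pos ((f t - f 0) / t)).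
  assert (Hteps : t * (Rabs l + 1) < eps) by (apply Rlt_div_r; [pose proof (Rabs_pos l)|]; lra).
  nra.
Qed.

Lemma right_quotient_of_derive f l : is_derive f 0 l ->
  filterlim (fun t => (f t - f 0) / t) (at_right 0) (locally l).
Proof.
  intros H. apply is_derive_Reals in H. apply filterlim_locally. intros eps.
  destruct (H eps (cond_pos eps)) as [d Hd]. exists d. intros t Ht Htp.
  change (Rabs (t - 0) < d) in Ht. rewrite Rminus_0_r in Ht.
  specialize (Hd t ltac:(lra) Ht). now rewrite Rplus_0_l in Hd.
Qed.

Lemma antitone_of_derive_nonpos (W dW : R -> R) T : 0 <= T ->
  (forall s, 0 < s <= T -> is_derive W s (dW s)) -> (forall s, 0 < s <= T -> dW s <= 0) ->
  right_continuous0 W -> W T <= W 0.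
Proof.
  intros HT Hd Hneg HW.
  assert (Hstep : forall t0, 0 < t0 <= T -> W T <= W t0).
  { intros t0 Ht0. destruct (MVT_gen W t0 T dW) as [c [Hc E]].
    - intros x Hx. apply Hd. rewrite Rmin_left, Rmax_right in Hx; lra.
    - intros x Hx. apply continuity_pt_filterlim, ex_derive_continuous_R.
      eexists. apply Hd. rewrite Rmin_left, Rmax_right in Hx; lra.
    - rewrite Rmin_left, Rmax_right in Hc by lra.
      assert (dW c * (T - t0) <= 0) by (apply Rmult_le_0_r; [apply Hneg|]; lra). lra. }
  destruct (Req_dec T 0) as [->|HT0]; [lra|].
  apply Rnot_lt_le. intros Hlt.
  destruct (proj1 (filterlim_locally W (W 0)) HW (mkposreal _ (proj2 (Rlt_0_minus _ _) Hlt))) as [d Hd'].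
  set (t0 := Rmin (d / 2) T).
  assert (Ht0 : 0 < t0 <= T)
    by (unfold t0; split; [apply Rmin_pos; [pose proof (cond_pos d)|]; lra|apply Rmin_r]).
  assert (Hb : Rabs (t0 - 0) < d).
  { rewrite Rminus_0_r, Rabs_right by lra. pose proof (Rmin_l (d / 2) T) as Hmin.
    pose proof (cond_pos d). fold t0 in Hmin. lra. }
  specialize (Hd' t0 Hb ltac:(lra)). change (Rabs (W t0 - W 0) < W T - W 0) in Hd'.
  pose proof (Rle_abs (W t0 - W 0)). pose proof (Hstep t0 Ht0). lra.
Qed.

Lemma continuous_le_at_left_end (phi : R -> R) c tau : continuous phi tau -> 0 < tau ->
  (forall s, 0 <= s < tau -> phi s <= c) -> phi tau <= c.
Proof.
  intros Hphi Htau Hs. apply Rnot_lt_le. intros Hlt.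
  destruct (proj1 (filterlim_locally phi (phi tau)) Hphi (mkposreal _ (proj2 (Rlt_0_minus _ _) Hlt)))
    as [d Hd].
  set (s := Rmax 0 (tau - d / 2)).
  assert (Hs0 : 0 <= s < tau)
    by (unfold s; split; [apply Rmax_l|apply Rmax_lub_lt; pose proof (cond_pos d); lra]).
  assert (Hsd : Rabs (s - tau) < d).
  { pose proof (cond_pos d). unfold s, Rmax. destruct Rle_dec; rewrite Rabs_left; lra. }
  specialize (Hd s Hsd). change (Rabs (phi s - phi tau) < phi tau - c) in Hd.
  pose proof (Hs s Hs0). pose proof (Rle_abs (- (phi s - phi tau))) as Habs.
  rewrite Rabs_Ropp in Habs. lra.
Qed.

Lemma continuous_induction (phi : R -> R) delta : 0 < delta -> (forall t, continuous phi t) ->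
  phi 0 <= 0 ->
  (forall T, 0 <= T -> (forall s, 0 <= s <= T -> phi s <= delta) -> phi T <= 0) ->
  forall T, 0 <= T -> phi T <= 0.
Proof.
  intros Hdelta Hphi H0 Hstep T1 HT1. apply Rnot_lt_le. intros Hbad.
  set (S := fun tau => 0 <= tau /\ forall s, 0 <= s <= tau -> phi s <= 0).
  assert (Hbound : forall tau, S tau -> tau < T1).
  { intros tau [_ Htau]. apply Rnot_le_lt. intros Hle. specialize (Htau T1 ltac:(lra)). lra. }
  destruct (completeness S) as [tau [Hub Hlub]].
  { exists T1. intros x Hx. left. now apply Hbound. }
  { exists 0. split; [lra|]. intros s Hs. now replace s with 0 by lra. }
  assert (Htau0 : 0 <= tau) by (apply Hub; split; [lra|]; intros s Hs; now replace s with 0 by lra).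
  assert (Hbefore : forall s, 0 <= s < tau -> phi s <= 0).
  { intros s Hs. destruct (classic (exists t, S t /\ s < t)) as [[t [[_ Ht] Hst]]|Hn].
    - apply Ht. lra.
    - exfalso. assert (tau <= s); [|lra]. apply Hlub. intros t Ht.
      apply Rnot_lt_le. intros Hst. apply Hn. now exists t. }
  assert (Hat : phi tau <= 0).
  { destruct (Req_dec tau 0) as [->|]; [auto|]. apply continuous_le_at_left_end; auto. lra. }
  destruct (proj1 (filterlim_locally phi (phi tau)) (Hphi tau) (mkposreal _ Hdelta)) as [rho Hrho].
  assert (Hafter : S (tau + rho / 2)).
  { pose proof (cond_pos rho). split; [lra|]. intros s Hs. apply Hstep; [lra|].
    intros s' Hs'. destruct (Rlt_le_dec s' tau); [pose proof (Hbefore s'); lra|].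
    assert (Hb : Rabs (s' - tau) < rho) by (rewrite Rabs_right; lra).
    specialize (Hrho s' Hb). change (Rabs (phi s' - phi tau) < delta) in Hrho.
    pose proof (Rle_abs (phi s' - phi tau)). lra. }
  pose proof (Hub _ Hafter). pose proof (cond_pos rho). lra.
Qed.

Lemma is_Rplus_deriv_of_is_derive (f g : R -> R) :
  (forall t, 0 <= t -> is_derive f t (g t)) -> is_Rplus_deriv f g.
Proof.
  intros H. split; [intros t Ht; apply H; lra|]. apply right_quotient_of_derive, H. lra.
Qed.

(** * Separable functions of position and velocity *)

(* A function of [(x, v)] of the form [sum_i f_i x * g_i v]. *)
Definition sepsum : Type := list ((R -> R) * (R -> R)).

Fixpoint sep_eval (p : sepsum) (a b : R) : R :=
  match p with
  | nil => 0
  | fg :: p => fst fg a * snd fg b + sep_eval p a b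
  end.

(* The derivative of [sep_eval p (x t) (v t)] along the flow of [x' = v, v' = sep_eval F x v]. *)
Definition sep_deriv (F p : sepsum) : sepsum :=
  flat_map (fun fg => (Derive (fst fg), fun v => snd fg v * v) ::
     map (fun q => (fun a => fst fg a * fst q a, fun v => Derive (snd fg) v * snd q v)) F) p.

Definition sep_smooth (U1 U2 : R -> Prop) (p : sepsum) : Prop :=
  List.Forall (fun fg => smooth_on U1 (fst fg) /\ smooth_on U2 (snd fg)) p.

Lemma sep_eval_app p q a b : sep_eval (p ++ q) a b = sep_eval p a b + sep_eval q a b.
Proof. induction p as [|fg p IH]; simpl; [ring|]. rewrite IH. ring. Qed.

Lemma sep_eval_map_mult (F : sepsum) (f g : R -> R) a b :
  sep_eval (map (fun q => (fun a => f a * fst q a, fun v => g v * snd q v)) F) a b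
  = f a * g b * sep_eval F a b.
Proof. induction F as [|q F IH]; simpl; [ring|]. rewrite IH. ring. Qed.

Lemma sep_deriv_smooth U1 U2 F p : open U1 -> open U2 ->
  sep_smooth U1 U2 F -> sep_smooth U1 U2 p -> sep_smooth U1 U2 (sep_deriv F p).
Proof.
  intros O1 O2 HF Hp. unfold sep_smooth in *.
  induction Hp as [|fg p [Hf Hg] Hp IH]; simpl; constructor.
  - split; [now apply smooth_Derive|apply smooth_mult; auto using smooth_id].
  - apply Forall_app. split; auto.
    apply Forall_forall. intros q' Hq'. apply in_map_iff in Hq' as [q [<- Hq]].
    rewrite Forall_forall in HF. destruct (HF q Hq). simpl.
    split; apply smooth_mult; auto using smooth_Derive.
Qed.

Lemma sep_eval_is_derive U1 U2 F p (x v : R -> R) t : sep_smooth U1 U2 p ->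
  U1 (x t) -> U2 (v t) -> is_derive x t (v t) -> is_derive v t (sep_eval F (x t) (v t)) ->
  is_derive (fun s => sep_eval p (x s) (v s)) t (sep_eval (sep_deriv F p) (x t) (v t)).
Proof.
  intros Hp Ux Uv Dx Dv. induction Hp as [|fg p [Hf Hg] Hp IH].
  - simpl. apply (is_derive_const (K := R_AbsRing) (V := R_NormedModule)).
  - assert (Da : is_derive (fun s => fst fg (x s)) t (v t * Derive (fst fg) (x t)))
      by (apply (is_derive_comp (fst fg) x); [apply (smooth_is_derive U1)|]; auto).
    assert (Db : is_derive (fun s => snd fg (v s)) t (sep_eval F (x t) (v t) * Derive (snd fg) (v t)))
      by (apply (is_derive_comp (snd fg) v); [apply (smooth_is_derive U2)|]; auto).
    pose proof (is_derive_plus _ _ _ _ _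
                  (is_derive_mult _ _ _ _ _ Da Db ltac:(intros; apply Rmult_comm)) IH) as D.
    replace (sep_eval (sep_deriv F (fg :: p)) (x t) (v t)) with
      (Derive (fst fg) (x t) * (snd fg (v t) * v t)
       + fst fg (x t) * Derive (snd fg) (v t) * sep_eval F (x t) (v t)
       + sep_eval (sep_deriv F p) (x t) (v t)).
    + match type of D with is_derive _ _ ?d =>
        replace (_ + _ + sep_eval (sep_deriv F p) (x t) (v t)) with d
          by (unfold plus, mult; simpl; ring) end.
      exact D.
    + simpl. fold (sep_deriv F p). rewrite sep_eval_app, sep_eval_map_mult. ring.
Qed.

Lemma C1_lipschitz_on_interval (a : R -> R) U D : Ck 1 U a -> (forall x, - D <= x <= D -> U x) ->
  exists K B, 0 <= K /\ 0 <= B /\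
    (forall x y, - D <= x <= D -> - D <= y <= D -> Rabs (a x - a y) <= K * Rabs (x - y)) /\
    (forall x, - D <= x <= D -> Rabs (a x) <= B).
Proof.
  intros [Hd HD] HU.
  destruct (Rle_dec (- D) D) as [HDle|HDgt].
  2:{ exists 0, 0. repeat split; try lra; intros; lra. }
  assert (Hmax : forall g, (forall x, U x -> continuous g x) ->
            exists B, 0 <= B /\ forall x, - D <= x <= D -> Rabs (g x) <= B).
  { intros g Hg. destruct (continuity_ab_maj (fun x => Rabs (g x)) (- D) D HDle) as [xm [Hm Hxm]].
    - intros c Hc. apply continuity_pt_filterlim, continuous_abs_comp, Hg, HU. auto.
    - exists (Rabs (g xm)). split; [apply Rabs_pos|auto]. }
  destruct (Hmax a) as [B [HB HaB]]; [intros; apply ex_derive_continuous_R; auto|].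
  destruct (Hmax (Derive a) HD) as [K [HK HaK]].
  exists K, B. repeat split; auto.
  intros x y Hx Hy.
  assert (Hbox : forall z, Rmin y x <= z <= Rmax y x -> - D <= z <= D).
  { intros z Hz. split; [apply Rle_trans with (Rmin y x)|apply Rle_trans with (Rmax y x)]; try lra.
    - apply Rmin_glb; lra.
    - apply Rmax_lub; lra. }
  destruct (MVT_gen a y x (Derive a)) as [c [Hc E]].
  - intros z Hz. apply Derive_correct, Hd, HU, Hbox. lra.
  - intros z Hz. apply continuity_pt_filterlim, ex_derive_continuous_R, Hd, HU, Hbox, Hz.
  - rewrite E, Rabs_mult. apply Rmult_le_compat_r; [apply Rabs_pos|]. apply HaK, Hbox, Hc.
Qed.

Lemma Rabs_mult_sub_le A A' G G' BA BG : Rabs A <= BA -> Rabs G' <= BG ->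
  Rabs (A * G - A' * G') <= BA * Rabs (G - G') + BG * Rabs (A - A').
Proof.
  intros HA HG. replace (A * G - A' * G') with (A * (G - G') + G' * (A - A')) by ring.
  eapply Rle_trans; [apply Rabs_triang|]. rewrite !Rabs_mult.
  apply Rplus_le_compat; apply Rmult_le_compat_r; auto using Rabs_pos.
Qed.

Lemma sep_eval_clamped_lipschitz U1 U2 Dx Dv p : 0 <= Dx -> 0 <= Dv -> sep_smooth U1 U2 p ->
  (forall x, - Dx <= x <= Dx -> U1 x) -> (forall v, - Dv <= v <= Dv -> U2 v) ->
  exists L B, 0 <= L /\
    lipschitz2 L (fun a b => sep_eval p (clamp (- Dx) Dx a) (clamp (- Dv) Dv b)) /\
    forall a b, Rabs (sep_eval p (clamp (- Dx) Dx a) (clamp (- Dv) Dv b)) <= B.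
Proof.
  intros HDx HDv Hp H1 H2.
  assert (Cx : forall a, - Dx <= clamp (- Dx) Dx a <= Dx) by (intros; apply clamp_in; lra).
  assert (Cv : forall b, - Dv <= clamp (- Dv) Dv b <= Dv) by (intros; apply clamp_in; lra).
  induction Hp as [|fg p [Hf Hg] Hp [L [B [HL [IL IB]]]]].
  - exists 0, 0. split; [lra|split].
    + intros a b a' b'. simpl. rewrite Rminus_0_r, Rabs_R0.
      pose proof (Rabs_pos (a - a')). pose proof (Rabs_pos (b - b')). lra.
    + intros. simpl. rewrite Rabs_R0. lra.
  - destruct (C1_lipschitz_on_interval (fst fg) U1 Dx (Hf 1%nat) H1) as [Kf [Bf [HKf [HBf [Lf Bf']]]]].
    destruct (C1_lipschitz_on_interval (snd fg) U2 Dv (Hg 1%nat) H2) as [Kg [Bg [HKg [HBg [Lg Bg']]]]].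
    exists (L + Bf * Kg + Bg * Kf), (Bf * Bg + B). split; [|split].
    + pose proof (Rmult_le_pos _ _ HBf HKg). pose proof (Rmult_le_pos _ _ HBg HKf). lra.
    + intros a b a' b'. specialize (IL a b a' b'). simpl in *.
      set (A := fst fg (clamp (- Dx) Dx a)). set (A' := fst fg (clamp (- Dx) Dx a')).
      set (G := snd fg (clamp (- Dv) Dv b)). set (G' := snd fg (clamp (- Dv) Dv b')).
      set (S := sep_eval p (clamp (- Dx) Dx a) (clamp (- Dv) Dv b)) in *.
      set (S' := sep_eval p (clamp (- Dx) Dx a') (clamp (- Dv) Dv b')) in *.
      assert (DA : Rabs (A - A') <= Kf * Rabs (a - a'))
        by (eapply Rle_trans; [apply Lf; apply Cx|apply Rmult_le_compat_l; auto; apply clamp_lipschitz]).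
      assert (DG : Rabs (G - G') <= Kg * Rabs (b - b'))
        by (eapply Rle_trans; [apply Lg; apply Cv|apply Rmult_le_compat_l; auto; apply clamp_lipschitz]).
      pose proof (Rabs_mult_sub_le A A' G G' Bf Bg (Bf' _ (Cx a)) (Bg' _ (Cv b'))).
      replace (A * G + S - (A' * G' + S')) with (A * G - A' * G' + (S - S')) by ring.
      eapply Rle_trans; [apply Rabs_triang|].
      pose proof (Rabs_pos (a - a')). pose proof (Rabs_pos (b - b')).
      pose proof (Rmult_le_compat_l _ _ _ HBf DG). pose proof (Rmult_le_compat_l _ _ _ HBg DA).
      pose proof (Rmult_le_pos _ _ (Rmult_le_pos _ _ HBf HKg) (Rabs_pos (a - a'))).
      pose proof (Rmult_le_pos _ _ (Rmult_le_pos _ _ HBg HKf) (Rabs_pos (b - b'))).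
      nra.
    + intros a b. simpl. eapply Rle_trans; [apply Rabs_triang|]. rewrite Rabs_mult.
      apply Rplus_le_compat; [apply Rmult_le_compat; auto using Rabs_pos|apply IB].
Qed.

(** * The equation as a first-order system *)

Lemma strict_margin c a b : 0 <= c -> c * a < b -> exists eta, 0 < eta /\ c * (a + eta) < b.
Proof.
  intros Hc Hab. exists ((b - c * a) / (c + 1)). split; [apply Rdiv_lt_0_compat; lra|].
  assert (0 < (b - c * a) / (c + 1)) by (apply Rdiv_lt_0_compat; lra).
  replace (c * (a + (b - c * a) / (c + 1))) with (b - (b - c * a) / (c + 1)) by (field; lra).
  lra.
Qed.

Lemma is_derive_weighted_sq (p q : R -> R) dp dq c s : is_derive p s dp -> is_derive q s dq ->
  is_derive (fun s => exp (- c * s) * (p s ^ 2 + q s ^ 2)) s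
    (exp (- c * s) * (- c * (p s ^ 2 + q s ^ 2) + 2 * p s * dp + 2 * q s * dq)).
Proof.
  intros Dp Dq.
  assert (De : is_derive (fun s => exp (- c * s)) s (- c * exp (- c * s))) by (auto_derive; [auto|ring]).
  pose proof (is_derive_mult _ _ _ _ _ De
                (is_derive_plus _ _ _ _ _ (is_derive_mult _ _ _ _ _ Dp Dp ltac:(intros; apply Rmult_comm))
                                          (is_derive_mult _ _ _ _ _ Dq Dq ltac:(intros; apply Rmult_comm)))
                ltac:(intros; apply Rmult_comm)) as D.
  apply (is_derive_ext (fun s => mult (exp (- c * s)) (plus (mult (p s) (p s)) (mult (q s) (q s))))).
  { intros t. unfold mult, plus; simpl. unfold mult, plus; simpl. ring. }
  match type of D with is_derive _ _ ?d =>
    replace (exp (- c * s) * _) with d by (unfold mult, plus; simpl; unfold mult, plus; simpl; ring) end.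
  exact D.
Qed.

Lemma gronwall_quadratic_bound p q r L : 0 <= L -> Rabs r <= L * (Rabs p + Rabs q) ->
  - (1 + 3 * L) * (p ^ 2 + q ^ 2) + 2 * p * q + 2 * q * r <= 0.
Proof.
  intros HL Hr.
  assert (2 * q * r <= 2 * Rabs q * (L * (Rabs p + Rabs q))).
  { pose proof (Rle_abs (q * r)) as Hqr. rewrite Rabs_mult in Hqr.
    pose proof (Rabs_pos q). pose proof (Rabs_pos r). nra. }
  assert (Ep : Rabs p * Rabs p = p ^ 2)
    by (rewrite <- Rabs_mult; simpl; rewrite Rmult_1_r; apply Rabs_right; nra).
  assert (Eq : Rabs q * Rabs q = q ^ 2)
    by (rewrite <- Rabs_mult; simpl; rewrite Rmult_1_r; apply Rabs_right; nra).
  pose proof (pow2_ge_0 (p - q)). pose proof (pow2_ge_0 (Rabs p - Rabs q)).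
  pose proof (Rabs_pos p). pose proof (Rabs_pos q).
  assert (L * (2 * Rabs q * Rabs p) <= L * (p ^ 2 + q ^ 2)) by (apply Rmult_le_compat_l; nra).
  nra.
Qed.

Section Equation.

Variables (l tb : R) (h : R -> R) (eps d0 m : R).
Hypothesis l_pos : 0 < l.
Hypothesis tb_pos : 0 < tb.
Hypothesis eps_nonneg : 0 <= eps.
Hypothesis h_ge_m : forall x, - l <= x <= l -> m <= h x.
Hypothesis h_cont : forall x, - l <= x <= l ->
  filterlim h (within (fun y => - l <= y <= l) (locally x)) (locally (h x)).
Hypothesis d0_small : eps * Rabs d0 < m.

Let smooth_tau0sq := tau0sq_smooth l tb h m l_pos h_ge_m h_cont.
Let tau0sq_positive := tau0sq_pos l tb h m l_pos h_ge_m h_cont tb_pos.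

(* With [m] the minimum of [h], [admissible_pos x] says [h + eps x > 0] on [[-l, l]]. *)
Definition admissible_pos (x : R) : Prop := - m < eps * x.
Definition admissible_vel (v : R) : Prop := l * (eps * v) < 2 * r0.

Lemma open_admissible_pos : open admissible_pos.
Proof. apply open_continuous_gt. intros. apply ex_derive_continuous_R. auto_derive. auto. Qed.

Lemma open_admissible_vel : open admissible_vel.
Proof. apply open_continuous_lt. intros. apply ex_derive_continuous_R. auto_derive. auto. Qed.

(* The equation solved for the acceleration, using [tau0 tau0' = (tau0^2)' / 2]. *)
Definition accel (x v : R) : R :=
  - (l * v + x + eps / 2 * Derive (tau0sq l tb h) (eps * x) * v ^ 2 + gamma_term l eps v)
  / tau0sq l tb h (eps * x).

Definition accel_sep : sepsum :=
  (fun x => - / tau0sq l tb h (eps * x), fun v => l * v) ::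
  (fun x => - (x / tau0sq l tb h (eps * x)), fun _ => 1) ::
  (fun x => - (eps / 2 * Derive (tau0sq l tb h) (eps * x) / tau0sq l tb h (eps * x)), fun v => v ^ 2) ::
  (fun x => - / tau0sq l tb h (eps * x), gamma_term l eps) :: nil.

Lemma accel_sep_eval x v : sep_eval accel_sep x v = accel x v.
Proof. unfold accel_sep, accel. simpl. unfold Rdiv. ring. Qed.

Lemma accel_sep_smooth : sep_smooth admissible_pos admissible_vel accel_sep.
Proof.
  pose proof open_admissible_pos as O1. pose proof open_admissible_vel as O2.
  assert (Heps : smooth_on admissible_pos (fun x => eps * x)) by (apply smooth_scal, smooth_id; auto).
  assert (HA : smooth_on admissible_pos (fun x => tau0sq l tb h (eps * x)))
    by (apply (smooth_comp _ O1 (fun r => - m < r)); auto).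
  assert (HAi : smooth_on admissible_pos (fun x => / tau0sq l tb h (eps * x))).
  { apply smooth_inv; auto. intros x Hx. pose proof (tau0sq_positive (eps * x) Hx). lra. }
  assert (HdA : smooth_on admissible_pos (fun x => Derive (tau0sq l tb h) (eps * x))).
  { apply (smooth_comp _ O1 (fun r => - m < r)); auto.
    exact (smooth_Derive _ _ smooth_tau0sq). }
  unfold accel_sep, Rdiv. repeat constructor; simpl.
  - now apply smooth_opp.
  - exact (smooth_scal _ O2 _ _ (smooth_id _ O2)).
  - apply (smooth_opp _ O1), (smooth_mult _ O1); [apply smooth_id|]; auto.
  - apply smooth_const; auto.
  - apply (smooth_opp _ O1), (smooth_mult _ O1); auto. now apply (smooth_scal _ O1).
  - apply (smooth_mult _ O2); [apply smooth_id|]; auto.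
    apply (smooth_mult _ O2); [apply smooth_id|apply smooth_const]; auto.
  - now apply smooth_opp.
  - apply gamma_term_smooth.
Qed.

Lemma equation_iff_accel x v a : admissible_pos x ->
  tau0 l tb h (eps * x) ^ 2 * a + l * v + x
  + eps * (tau0 l tb h (eps * x) * tau0' l tb h (eps * x) + gamma l (eps * v)) * v ^ 2 = 0
  <-> a = accel x v.
Proof.
  intros Hx. pose proof (tau0sq_positive _ Hx).
  rewrite (tau0_sqr l tb h m) by auto.
  replace (eps * (tau0 l tb h (eps * x) * tau0' l tb h (eps * x) + gamma l (eps * v)) * v ^ 2)
    with (eps * (tau0 l tb h (eps * x) * tau0' l tb h (eps * x)) * v ^ 2
          + eps * gamma l (eps * v) * v ^ 2) by ring.
  rewrite (tau0_mul_tau0' l tb h m), gamma_term_eq by auto.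
  unfold accel. split; intros E.
  - apply (Rmult_eq_reg_l (tau0sq l tb h (eps * x))); [|lra]. field_simplify; lra.
  - rewrite E. field. lra.
Qed.

Definition energy (x v : R) : R := tau0sq l tb h (eps * x) * v ^ 2 / 2 + x ^ 2 / 2.

Lemma energy_derive (x v : R -> R) s : admissible_pos (x s) ->
  is_derive x s (v s) -> is_derive v s (accel (x s) (v s)) ->
  is_derive (fun s => energy (x s) (v s)) s (- (l * v s ^ 2 + v s * gamma_term l eps (v s))).
Proof.
  intros Hx Dx Dv. pose proof (tau0sq_positive _ Hx).
  assert (DA : is_derive (fun s => tau0sq l tb h (eps * x s)) s
                 (eps * v s * Derive (tau0sq l tb h) (eps * x s))).
  { apply (is_derive_comp (tau0sq l tb h) (fun s => eps * x s)); [|now apply is_derive_scal].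
    apply (smooth_is_derive (fun r => - m < r)); auto. }
  pose proof (is_derive_mult _ _ _ _ _ Dv Dv ltac:(intros; apply Rmult_comm)) as Dvv.
  pose proof (is_derive_mult _ _ _ _ _ Dx Dx ltac:(intros; apply Rmult_comm)) as Dxx.
  pose proof (is_derive_mult _ _ _ _ _ DA Dvv ltac:(intros; apply Rmult_comm)) as DAvv.
  pose proof (is_derive_plus _ _ _ _ _ (is_derive_scal _ _ (/ 2) _ DAvv) (is_derive_scal _ _ (/ 2) _ Dxx))
    as DE.
  apply (is_derive_ext (fun s => scal (/ 2) (mult (tau0sq l tb h (eps * x s)) (mult (v s) (v s)))
                                 + scal (/ 2) (mult (x s) (x s)))).
  { intros t. unfold energy, scal, mult; simpl. unfold mult; simpl. field. }
  match type of DE with is_derive _ _ ?d =>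
    replace (- (l * v s ^ 2 + v s * gamma_term l eps (v s))) with d end;
    [exact DE|].
  unfold plus, scal, mult; simpl. unfold mult; simpl. unfold accel. field. lra.
Qed.

Lemma energy_nonincreasing (x v : R -> R) T : 0 <= T ->
  right_continuous0 x -> right_continuous0 v ->
  (forall s, 0 < s <= T -> is_derive x s (v s) /\ is_derive v s (accel (x s) (v s))) ->
  (forall s, 0 <= s <= T -> admissible_pos (x s) /\ admissible_vel (v s)) ->
  energy (x T) (v T) <= energy (x 0) (v 0).
Proof.
  intros HT Rx Rv Hd HU.
  apply (antitone_of_derive_nonpos (fun s => energy (x s) (v s))
           (fun s => - (l * v s ^ 2 + v s * gamma_term l eps (v s))) T HT).
  - intros s Hs. destruct (Hd s Hs). apply energy_derive; auto. apply HU. lra.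
  - intros s Hs. destruct (HU s ltac:(lra)) as [_ Hv].
    pose proof (gamma_term_dissipative l eps (v s) l_pos eps_nonneg Hv). lra.
  - apply (right_continuous0_ext (fun t => tau0sq l tb h (eps * x t) * (v t * v t) * / 2
                                          + x t * x t * / 2)).
    { intros t. unfold energy. field. }
    assert (HA : right_continuous0 (fun t => tau0sq l tb h (eps * x t))).
    { apply (right_continuous0_comp x (fun a => tau0sq l tb h (eps * a))); auto.
      apply (smooth_continuous admissible_pos); [|apply HU; lra].
      apply (smooth_comp _ open_admissible_pos (fun r => - m < r)); auto.
      apply (smooth_scal _ open_admissible_pos), smooth_id, open_admissible_pos. }
    apply right_continuous0_plus; (apply right_continuous0_mult; [|apply right_continuous0_const]).
    + apply right_continuous0_mult; [exact HA|now apply right_continuous0_mult].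
    + now apply right_continuous0_mult.
Qed.

Definition vmax : R := Rabs d0 / sqrt (tau0sq l tb h (eps * Rabs d0)).

Lemma eps_d0_admissible : - m < eps * Rabs d0.
Proof. pose proof (Rabs_pos d0). nra. Qed.

Lemma vmax_nonneg : 0 <= vmax.
Proof.
  pose proof (tau0sq_positive _ eps_d0_admissible).
  apply Rdiv_le_0_compat; [apply Rabs_pos|now apply sqrt_lt_R0].
Qed.

Lemma bounds_of_energy x v : admissible_pos x -> energy x v <= energy d0 0 ->
  Rabs x <= Rabs d0 /\ Rabs v <= vmax.
Proof.
  intros Hx HE. unfold energy in HE.
  replace (tau0sq l tb h (eps * d0) * 0 ^ 2 / 2 + d0 ^ 2 / 2) with (d0 * d0 / 2) in HE by (simpl; field).
  pose proof (tau0sq_positive _ Hx). pose proof (tau0sq_positive _ eps_d0_admissible).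
  assert (Hvv : 0 <= tau0sq l tb h (eps * x) * (v * (v * 1))) by (apply Rmult_le_pos; nra).
  assert (Hxx : x * x <= d0 * d0) by nra.
  assert (HX : Rabs x <= Rabs d0) by (apply Rsqr_le_abs_0; unfold Rsqr; lra).
  split; auto.
  assert (HA : tau0sq l tb h (eps * Rabs d0) <= tau0sq l tb h (eps * x)).
  { apply (tau0sq_antitone l tb h m); auto.
    apply Rmult_le_compat_l; auto. pose proof (Rle_abs x). lra. }
  set (q := sqrt (tau0sq l tb h (eps * Rabs d0))).
  assert (Hq : 0 < q) by now apply sqrt_lt_R0.
  assert (Hqq : q * q = tau0sq l tb h (eps * Rabs d0)) by (apply sqrt_sqrt; lra).
  unfold vmax. fold q. apply Rle_div_r; [auto|].
  apply Rsqr_incr_0_var; [|apply Rabs_pos]. unfold Rsqr.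
  replace (Rabs v * q * (Rabs v * q)) with (q * q * (Rabs v * Rabs v)) by ring.
  assert (Ev : Rabs v * Rabs v = v * v) by (rewrite <- Rabs_mult; apply Rabs_right; nra).
  assert (Ed : Rabs d0 * Rabs d0 = d0 * d0) by (rewrite <- Rabs_mult; apply Rabs_right; nra).
  rewrite Hqq, Ev, Ed.
  apply Rle_trans with (tau0sq l tb h (eps * x) * (v * v)); [apply Rmult_le_compat_r; nra|nra].
Qed.

Lemma vmax_small_of_tau0 : eps * Rabs d0 < tau0 l tb h (eps * Rabs d0) * (2 * r0 / l) ->
  l * (eps * vmax) < 2 * r0.
Proof.
  intros H. rewrite (tau0_eq l tb h m) in H by auto using eps_d0_admissible.
  pose proof (tau0sq_positive _ eps_d0_admissible).
  set (q := sqrt (tau0sq l tb h (eps * Rabs d0))) in *.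
  assert (Hq : 0 < q) by now apply sqrt_lt_R0.
  unfold vmax. fold q.
  replace (l * (eps * (Rabs d0 / q))) with ((eps * Rabs d0) * (l / q)) by (field; lra).
  apply (Rmult_lt_compat_r (l / q)) in H; [|apply Rdiv_lt_0_compat; lra].
  replace (q * (2 * r0 / l) * (l / q)) with (2 * r0) in H by (field; lra). exact H.
Qed.

Hypothesis vmax_small : l * (eps * vmax) < 2 * r0.

Lemma admissible_margin : exists eta, 0 < eta /\
  (forall x, Rabs x <= Rabs d0 + eta -> admissible_pos x) /\
  (forall v, Rabs v <= vmax + eta -> admissible_vel v).
Proof.
  destruct (strict_margin eps (Rabs d0) m eps_nonneg d0_small) as [e1 [He1 H1]].
  destruct (strict_margin (l * eps) vmax (2 * r0) ltac:(nra) ltac:(lra)) as [e2 [He2 H2]].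
  exists (Rmin e1 e2). pose proof (Rmin_l e1 e2). pose proof (Rmin_r e1 e2).
  split; [now apply Rmin_pos|split].
  - intros x Hx. unfold admissible_pos. pose proof (Rle_abs (- x)) as Hx'. rewrite Rabs_Ropp in Hx'.
    assert (eps * - x <= eps * (Rabs d0 + e1)) by (apply Rmult_le_compat_l; lra). lra.
  - intros v Hv. unfold admissible_vel. pose proof (Rle_abs v).
    assert (l * eps * v <= l * eps * (vmax + e2)) by (apply Rmult_le_compat_l; nra). nra.
Qed.

(* Only right-continuity is required at [t = 0], where a solution in the sense of
   [is_global_solution] is only right-differentiable. *)
Definition solves_on_Rplus (x v : R -> R) : Prop :=
  x 0 = d0 /\ v 0 = 0 /\ right_continuous0 x /\ right_continuous0 v /\
  (forall t, 0 < t -> is_derive x t (v t) /\ is_derive v t (accel (x t) (v t))) /\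
  (forall t, 0 <= t -> admissible_pos (x t) /\ admissible_vel (v t)).

Lemma a_priori_bound x v : solves_on_Rplus x v ->
  forall t, 0 <= t -> Rabs (x t) <= Rabs d0 /\ Rabs (v t) <= vmax.
Proof.
  intros (x0 & v0 & Rx & Rv & Hd & HU) t Ht.
  apply bounds_of_energy; [now apply HU|].
  replace (energy d0 0) with (energy (x 0) (v 0)) by now rewrite x0, v0.
  apply energy_nonincreasing; auto.
  - intros s Hs. apply Hd. lra.
  - intros s Hs. apply HU. lra.
Qed.

Lemma continuous_box_excess (X Y : R -> R) a b t : continuous X t -> continuous Y t ->
  continuous (fun s => Rmax (Rabs (X s) - a) (Rabs (Y s) - b)) t.
Proof.
  intros HX HY.
  apply (lipschitz2_comp_continuous 1 Rmax (fun s => Rabs (X s) - a) (fun s => Rabs (Y s) - b));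
    [apply Rmax_lipschitz2| |];
    apply continuous_minus_fun; auto using continuous_const, continuous_abs_comp.
Qed.

Lemma truncated_solution_exists Dx Dv : 0 <= Dx -> 0 <= Dv ->
  (forall x, Rabs x <= Dx -> admissible_pos x) -> (forall v, Rabs v <= Dv -> admissible_vel v) ->
  exists X Y : R -> R, X 0 = d0 /\ Y 0 = 0 /\ (forall t, continuous X t /\ continuous Y t) /\
    forall t, Rabs (X t) <= Dx -> Rabs (Y t) <= Dv ->
      is_derive X t (Y t) /\ is_derive Y t (accel (X t) (Y t)).
Proof.
  intros HDx HDv HU1 HU2.
  destruct (sep_eval_clamped_lipschitz admissible_pos admissible_vel Dx Dv accel_sep HDx HDv
              accel_sep_smooth)
    as [L [B [HL [Lip Bd]]]]; [intros x Hx; apply HU1, Rabs_le, Hx|intros v Hv; apply HU2, Rabs_le, Hv|].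
  (* Truncated outside the box [|x| <= Dx, |v| <= Dv], the system is globally Lipschitz. *)
  set (f := fun (i : bool) a b =>
    if i then clamp (- Dv) Dv b else sep_eval accel_sep (clamp (- Dx) Dx a) (clamp (- Dv) Dv b)).
  destruct (picard_lindelof f (fun i => if i then d0 else 0) (L + 1) (B + Dv)) as [z [Hz0 Hz]].
  { lra. }
  { intros [|] a b a' b'; cbv beta iota delta [f];
      (eapply Rle_trans; [apply clamp_lipschitz || apply Lip|]);
      pose proof (Rabs_pos (a - a')); pose proof (Rabs_pos (b - b')); nra. }
  { intros [|] a b; cbv beta iota delta [f]; pose proof (Bd a b).
    - pose proof (Rabs_pos (sep_eval accel_sep (clamp (- Dx) Dx a) (clamp (- Dv) Dv b))).
      pose proof (Rabs_le _ _ (clamp_in (- Dv) Dv b ltac:(lra))). lra.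
    - lra. }
  exists (z true), (z false). split; [apply (Hz0 true)|split; [apply (Hz0 false)|split]].
  - intros t. split; apply ex_derive_continuous_R; eexists; apply Hz.
  - intros t Hx Hv. pose proof (Hz true t) as D1. pose proof (Hz false t) as D2.
    unfold f in D1, D2.
    rewrite (clamp_id (- Dv)) in D1, D2 by now apply Rabs_le_between.
    rewrite (clamp_id (- Dx)), accel_sep_eval in D2 by now apply Rabs_le_between.
    auto.
Qed.

Lemma solution_exists : exists X Y : R -> R, solves_on_Rplus X Y /\
  forall t, 0 <= t -> is_derive X t (Y t) /\ is_derive Y t (accel (X t) (Y t)).
Proof.
  destruct admissible_margin as [eta [Heta [HU1 HU2]]]. pose proof vmax_nonneg.
  pose proof (Rabs_pos d0).
  destruct (truncated_solution_exists (Rabs d0 + eta) (vmax + eta)) as (X & Y & HX0 & HY0 & Hcont & Hbox);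
    auto; try lra.
  assert (Hbound : forall T, 0 <= T -> Rmax (Rabs (X T) - Rabs d0) (Rabs (Y T) - vmax) <= 0).
  { apply (continuous_induction _ eta Heta); [intros; apply continuous_box_excess; apply Hcont| |].
    - rewrite HX0, HY0, Rabs_R0. apply Rmax_lub; lra.
    - intros T HT Hle.
      assert (Hin : forall s, 0 <= s <= T -> Rabs (X s) <= Rabs d0 + eta /\ Rabs (Y s) <= vmax + eta).
      { intros s Hs. specialize (Hle s Hs). pose proof (Rmax_l (Rabs (X s) - Rabs d0) (Rabs (Y s) - vmax)).
        pose proof (Rmax_r (Rabs (X s) - Rabs d0) (Rabs (Y s) - vmax)). lra. }
      assert (HU : forall s, 0 <= s <= T -> admissible_pos (X s) /\ admissible_vel (Y s))
        by (intros s Hs; destruct (Hin s Hs); split; [apply HU1|apply HU2]; auto).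
      destruct (bounds_of_energy (X T) (Y T)) as [BX BY]; [apply HU; lra| |apply Rmax_lub; lra].
      replace (energy d0 0) with (energy (X 0) (Y 0)) by now rewrite HX0, HY0.
      apply energy_nonincreasing; [lra|apply right_continuous0_of_continuous, Hcont..| |exact HU].
      intros s Hs. destruct (Hin s ltac:(lra)). now apply Hbox. }
  assert (Hin : forall t, 0 <= t -> Rabs (X t) <= Rabs d0 /\ Rabs (Y t) <= vmax).
  { intros t Ht. specialize (Hbound t Ht).
    pose proof (Rmax_l (Rabs (X t) - Rabs d0) (Rabs (Y t) - vmax)).
    pose proof (Rmax_r (Rabs (X t) - Rabs d0) (Rabs (Y t) - vmax)). lra. }
  assert (Hd : forall t, 0 <= t -> is_derive X t (Y t) /\ is_derive Y t (accel (X t) (Y t)))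
    by (intros t Ht; destruct (Hin t Ht); apply Hbox; lra).
  exists X, Y. split; [|exact Hd].
  split; [auto|split; [auto|split; [|split; [|split]]]];
    try (apply right_continuous0_of_continuous, Hcont).
  - intros t Ht. apply Hd. lra.
  - intros t Ht. destruct (Hin t Ht). split; [apply HU1|apply HU2]; lra.
Qed.

Lemma accel_lipschitz_on_box : exists L, 0 <= L /\
  forall a b a' b', Rabs a <= Rabs d0 -> Rabs a' <= Rabs d0 -> Rabs b <= vmax -> Rabs b' <= vmax ->
    Rabs (accel a b - accel a' b') <= L * (Rabs (a - a') + Rabs (b - b')).
Proof.
  destruct admissible_margin as [eta [Heta [HU1 HU2]]].
  destruct (sep_eval_clamped_lipschitz admissible_pos admissible_vel (Rabs d0) vmax accel_sep
              (Rabs_pos d0) vmax_nonneg accel_sep_smooth) as [L [_ [HL [Lip _]]]].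
  { intros x Hx. apply HU1. apply Rabs_le_between in Hx. lra. }
  { intros v Hv. apply HU2. apply Rabs_le_between in Hv. lra. }
  exists L. split; auto. intros a b a' b' Ha Ha' Hb Hb'.
  specialize (Lip a b a' b'). cbv beta in Lip.
  rewrite !clamp_id, !accel_sep_eval in Lip by now apply Rabs_le_between. exact Lip.
Qed.

(* Gronwall: the weight [exp (- (1 + 3 L) t)] makes [|x - X|^2 + |v - Y|^2] nonincreasing. *)
Lemma solution_unique x v X Y : solves_on_Rplus x v -> solves_on_Rplus X Y ->
  forall T, 0 <= T -> x T = X T.
Proof.
  intros Hxv HXY T HT.
  pose proof (a_priori_bound x v Hxv) as Bxv. pose proof (a_priori_bound X Y HXY) as BXY.
  destruct Hxv as (x0 & v0 & Rx & Rv & Dxv & _), HXY as (X0 & Y0 & RX & RY & DXY & _).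
  destruct accel_lipschitz_on_box as [L [HL Lip]].
  set (c := 1 + 3 * L).
  set (W := fun s => exp (- c * s) * ((x s - X s) ^ 2 + (v s - Y s) ^ 2)).
  assert (HW : W T <= W 0).
  { apply (antitone_of_derive_nonpos W (fun s => exp (- c * s) *
             (- c * ((x s - X s) ^ 2 + (v s - Y s) ^ 2) + 2 * (x s - X s) * (v s - Y s)
              + 2 * (v s - Y s) * (accel (x s) (v s) - accel (X s) (Y s)))) T HT).
    - intros s Hs. destruct (Dxv s ltac:(lra)) as [Dx Dv], (DXY s ltac:(lra)) as [DX DY].
      apply (is_derive_weighted_sq (fun s => x s - X s) (fun s => v s - Y s)).
      + exact (is_derive_minus _ _ _ _ _ Dx DX).
      + exact (is_derive_minus _ _ _ _ _ Dv DY).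
    - intros s Hs. destruct (Bxv s ltac:(lra)), (BXY s ltac:(lra)).
      apply Rmult_le_0_l; [left; apply exp_pos|].
      apply (gronwall_quadratic_bound _ _ _ L); auto.
    - unfold W. apply right_continuous0_mult.
      + apply right_continuous0_of_continuous, ex_derive_continuous_R. auto_derive. auto.
      + apply right_continuous0_ext with (fun s => (x s - X s) * (x s - X s) + (v s - Y s) * (v s - Y s));
          [intros; ring|].
        apply right_continuous0_plus; apply right_continuous0_mult; apply right_continuous0_minus; auto. }
  unfold W in HW. rewrite x0, X0, v0, Y0 in HW. pose proof (exp_pos (- c * T)).
  assert (E : (x T - X T) ^ 2 = 0)
    by (pose proof (pow2_ge_0 (x T - X T)); pose proof (pow2_ge_0 (v T - Y T)); nra).
  apply Rminus_diag_uniq. destruct (Req_dec (x T - X T) 0); auto. now apply (pow_nonzero _ 2) in E.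
Qed.

Definition derivative_sep (n : nat) : sepsum :=
  Nat.iter n (sep_deriv accel_sep) ((fun a => a, fun _ => 1) :: nil).

Lemma derivative_sep_smooth n : sep_smooth admissible_pos admissible_vel (derivative_sep n).
Proof.
  induction n as [|n IH]; simpl.
  - apply List.Forall_cons; [|apply List.Forall_nil].
    split; [exact (smooth_id _ open_admissible_pos)|exact (smooth_const _ open_admissible_vel 1)].
  - apply sep_deriv_smooth; auto using open_admissible_pos, open_admissible_vel, accel_sep_smooth.
Qed.

(* Along the flow, the [n]-th derivative of [X] is [sep_eval (derivative_sep n) X Y]. *)
Lemma solution_Cinf X Y : (forall t, 0 <= t -> admissible_pos (X t) /\ admissible_vel (Y t)) ->
  (forall t, 0 <= t -> is_derive X t (Y t) /\ is_derive Y t (accel (X t) (Y t))) ->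
  Cinf_Rplus X.
Proof.
  intros HU HD. exists (fun n t => sep_eval (derivative_sep n) (X t) (Y t)). split.
  - intros t _. simpl. ring.
  - intros n. apply is_Rplus_deriv_of_is_derive. intros t Ht.
    destruct (HU t Ht), (HD t Ht).
    apply (sep_eval_is_derive admissible_pos admissible_vel); auto using derivative_sep_smooth.
    now rewrite accel_sep_eval.
Qed.

Hypothesis h_min : exists xm, - l <= xm <= l /\ h xm = m.

Lemma global_solution_of_solution X Y : solves_on_Rplus X Y ->
  (forall t, 0 <= t -> is_derive X t (Y t) /\ is_derive Y t (accel (X t) (Y t))) ->
  is_global_solution l tb h eps d0 X.
Proof.
  intros (X0 & Y0 & _ & _ & _ & HU) HD. split; [now apply (solution_Cinf X Y)|].
  exists Y, (fun t => accel (X t) (Y t)).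
  split; [apply is_Rplus_deriv_of_is_derive; intros; now apply HD|].
  split; [apply is_Rplus_deriv_of_is_derive; intros; now apply HD|].
  do 2 (split; auto). intros t Ht. destruct (HU t Ht) as [HX HY].
  split; [intros x Hx; pose proof (h_ge_m x Hx); unfold admissible_pos in HX; lra|].
  split; [auto|]. now apply equation_iff_accel.
Qed.

Lemma solution_of_global_solution delta : is_global_solution l tb h eps d0 delta ->
  exists v, solves_on_Rplus delta v.
Proof.
  intros [_ (d1 & d2 & D1 & D2 & E0 & E1 & Heq)]. destruct h_min as [xm [Hxm Hm]].
  assert (HU : forall t, 0 <= t -> admissible_pos (delta t) /\ admissible_vel (d1 t)).
  { intros t Ht. destruct (Heq t Ht) as [Hh [Hv _]]. split; auto.
    unfold admissible_pos. specialize (Hh xm Hxm). lra. }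
  exists d1. split; [auto|split; [auto|split; [|split; [|split; [|exact HU]]]]].
  - apply (right_continuous0_of_quotient _ (d1 0)), D1.
  - apply (right_continuous0_of_quotient _ (d2 0)), D2.
  - intros t Ht. split; [now apply D1|].
    replace (accel (delta t) (d1 t)) with (d2 t); [now apply D2|].
    apply equation_iff_accel; [apply HU; lra|]. apply Heq. lra.
Qed.

Theorem global_solution_exists_unique : exists delta,
  is_global_solution l tb h eps d0 delta /\
  forall delta', is_global_solution l tb h eps d0 delta' -> forall t, 0 <= t -> delta' t = delta t.
Proof.
  destruct solution_exists as [X [Y [HXY HD]]].
  exists X. split; [now apply (global_solution_of_solution X Y)|].
  intros delta Hdelta t Ht. destruct (solution_of_global_solution delta Hdelta) as [v Hv].
  now apply (solution_unique delta v X Y).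
Qed.

End Equation.

Lemma lt_of_lt_Glb_Rbar (E : R -> Prop) (a y : R) : Rbar_lt a (Glb_Rbar E) -> E y -> a < y.
Proof.
  intros Ha Ey. destruct (Glb_Rbar_correct E) as [Hlb _].
  exact (Rbar_lt_le_trans _ _ _ Ha (Hlb y Ey)).
Qed.

Theorem proposition4p9 (l tb : R) (h : R -> R) (eps d0 : R)
  (hl : 0 < l) (htb : 0 < tb)
  (hpos : forall x, - l <= x <= l -> 0 < h x)
  (hcont : forall x, - l <= x <= l ->
     filterlim h (within (fun y => - l <= y <= l) (locally x)) (locally (h x)))
  (heven : forall x, - l <= x <= l -> h (- x) = h x)
  (heps : 0 <= eps)
  (hinf : Rbar_lt (Finite (eps * Rabs d0))
            (Glb_Rbar (fun y => exists x, - l <= x <= l /\ y = h x)))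
  (hsmall : eps * Rabs d0 < tau0 l tb h (eps * Rabs d0) * (2 * r0 / l)) :
  exists delta : R -> R,
    is_global_solution l tb h eps d0 delta /\
    forall delta' : R -> R, is_global_solution l tb h eps d0 delta' ->
      forall t, 0 <= t -> delta' t = delta t.
Proof.
  clear heven hpos.
  destruct (h_attains_min l h hl hcont) as [xm [Hxm Hmin]].
  assert (Hm : eps * Rabs d0 < h xm) by (apply (lt_of_lt_Glb_Rbar _ _ _ hinf); now exists xm).
  apply (global_solution_exists_unique l tb h eps d0 (h xm)); auto.
  - now apply (vmax_small_of_tau0 l tb h eps d0 (h xm)).
  - now exists xm.
Qed.
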